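(* Under the standing setting and Assumptions (A1), (A2), (A3) described in the context: (i) for every $\delta>0$, $\displaystyle\lim_{\epsilon\to0}\inf\{t\ge0: |X(t)-\bar X^{\rm c}(t)|>\delta\}=+\infty$ almost surely; (ii) there exists a function $T:(0,\epsilon_0)\to\mathbb N$ with $\lim_{\epsilon\to0}T(\epsilon)=+\infty$ such that for every $\delta>0$, $$\lim_{\epsilon\to0}P\Big\{\sup_{0\le t\le T(\epsilon)}|X(t)-\bar X^{\rm c}(t)|>\delta\Big\}=0.$$
   Context: Setting. Let $(\Omega,\mathcal F,P)$ be a complete probability space, $\epsilon_0>0$ fixed and $\epsilon\in(0,\epsilon_0)$ a small parameter. Consider the discrete-time system $$X_{k+1}=X_k+\epsilon f(X_k,Y_{k+1}),\quad k=0,1,2,\dots,\qquad X_0=x\in\mathbb R^n \text{ (deterministic)},$$ where $\{Y_k\}$ is an $\mathbb R^m$-valued stochastic sequence with state space $S_Y\subset\mathbb R^m$, and $f:\mathbb R^n\times\mathbb R^m\to\mathbb R^n$. (A1) $f(x,y)$ is continuous in $(x,y)$; for each $x$, $y\mapsto f(x,y)$ is bounded; and $f$ is locally Lipschitz in $x$ uniformly in $y$: for every compact $D\subset\mathbb R^n$ there is $k_D$ with $|f(x_1,y)-f(x_2,y)|\le k_D|x_1-x_2|$ for all $x_1,x_2\in D$, $y\in S_Y$. (A2) $\{Y_k\}$ is ergodic with invariant distribution $\mu$, in the sense that for each $x$, $\bar f(x):=\int_{S_Y}f(x,y)\mu(dy)=\lim_{N\to\infty}\frac1{N+1}\sum_{k=0}^N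 f(x,Y_{k+1})$ almost surely. Average systems: the discrete average system $\bar X^{\rm d}_{k+1}=\bar X^{\rm d}_k+\epsilon\bar f(\bar X^{\rm d}_k)$, and the continuous average system $\frac{d}{dt}\bar X^{\rm c}(t)=\bar f(\bar X^{\rm c}(t))$, both with initial value $\bar X^{\rm d}_0=\bar X^{\rm c}(0)=X_0=x$. (A3) The continuous average system has a solution on $[0,\infty)$. Continuous-time versions: with $t_k=\epsilon k$, define the piecewise constant processes $X(t)=X_k$ and $\bar X^{\rm d}(t)=\bar X^{\rm d}_k$ for $t_k\le t<t_{k+1}$ (these depend on $\epsilon$). *)

From Stdlib Require Import Reals Lra Lia ZArith List.
Open Scope R_scope.

Definition vec (n : nat) := forall i : nat, (i < n)%nat -> R.

Definition vadd {n} (u v : vec n) : vec n := fun i H => u i H + v i H.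
Definition vscal {n} (c : R) (v : vec n) : vec n := fun i H => c * v i H.
Definition vsub {n} (u v : vec n) : vec n := fun i H => u i H - v i H.

Definition vget {n} (v : vec n) (i : nat) : R :=
  match lt_dec i n with left H => v i H | right _ => 0 end.

Fixpoint rsum (g : nat -> R) (k : nat) : R :=
  match k with O => 0 | S k' => rsum g k' + g k' end.

Definition vnorm {n} (v : vec n) : R := sqrt (rsum (fun i => (vget v i) ^ 2) n).

Fixpoint vsum {n} (g : nat -> vec n) (N : nat) : vec n :=
  match N with O => g O | S N' => vadd (vsum g N') (g N) end.

Definition vec_cv {n} (u : nat -> vec n) (l : vec n) : Prop :=
  forall e, 0 < e -> exists N, forall k, (N <= k)%nat -> vnorm (vsub (u k) l) < e.

Definition is_open {n} (U : vec n -> Prop) : Prop :=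
  forall x, U x -> exists r, 0 < r /\ forall y, vnorm (vsub y x) < r -> U y.

Definition is_compact {n} (D : vec n -> Prop) : Prop :=
  forall (I : Type) (U : I -> vec n -> Prop),
    (forall i, is_open (U i)) ->
    (forall x, D x -> exists i, U i x) ->
    exists l : list I, forall x, D x -> exists i, In i l /\ U i x.

Definition jointly_continuous {n m} (f : vec n -> vec m -> vec n) : Prop :=
  forall x y e, 0 < e -> exists d, 0 < d /\
    forall x' y', vnorm (vsub x' x) < d -> vnorm (vsub y' y) < d ->
      vnorm (vsub (f x' y') (f x y)) < e.

(** Xc solves dX/dt = g(X) on [0, +oo) (one-sided derivative at t = 0) *)
Definition ode_solution_nonneg {n} (g : vec n -> vec n) (Xc : R -> vec n) : Prop :=
  forall t, 0 <= t -> forall e, 0 < e -> exists d, 0 < d /\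
    forall h, h <> 0 -> Rabs h < d -> 0 <= t + h ->
      vnorm (vsub (vscal (/ h) (vsub (Xc (t + h)) (Xc t))) (g (Xc t))) < e.

Definition is_sigma_algebra {Omega : Type} (F : (Omega -> Prop) -> Prop) : Prop :=
  F (fun _ => True) /\
  (forall A, F A -> F (fun w => ~ A w)) /\
  (forall A : nat -> Omega -> Prop, (forall k, F (A k)) -> F (fun w => exists k, A k w)).

Definition is_probability {Omega : Type} (F : (Omega -> Prop) -> Prop)
    (P : (Omega -> Prop) -> R) : Prop :=
  is_sigma_algebra F /\
  (forall A, F A -> 0 <= P A) /\
  P (fun _ => True) = 1 /\
  (forall A : nat -> Omega -> Prop, (forall k, F (A k)) ->
     (forall i j w, i <> j -> A i w -> A j w -> False) ->
     infinite_sum (fun k => P (A k)) (P (fun w => exists k, A k w))).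

Definition is_complete {Omega : Type} (F : (Omega -> Prop) -> Prop)
    (P : (Omega -> Prop) -> R) : Prop :=
  forall A B, F B -> P B = 0 -> (forall w, A w -> B w) -> F A.

Definition almost_surely {Omega : Type} (F : (Omega -> Prop) -> Prop)
    (P : (Omega -> Prop) -> R) (Q : Omega -> Prop) : Prop :=
  exists N, F N /\ P N = 0 /\ forall w, ~ N w -> Q w.

Definition random_vec {Omega : Type} {m} (F : (Omega -> Prop) -> Prop)
    (Z : Omega -> vec m) : Prop :=
  forall U : vec m -> Prop, is_open U -> F (fun w => U (Z w)).

Fixpoint Xseq {n m} {Omega : Type} (f : vec n -> vec m -> vec n)
    (Y : nat -> Omega -> vec m) (eps : R) (x : vec n) (w : Omega) (k : nat) : vec n :=
  match k with
  | O => x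
  | S k' => let p := Xseq f Y eps x w k' in vadd p (vscal eps (f p (Y k w)))
  end.

(** piecewise constant interpolation: X(t) = X_k for eps k <= t < eps (k+1), t >= 0 *)
Definition Xcont {n m} {Omega : Type} (f : vec n -> vec m -> vec n)
    (Y : nat -> Omega -> vec m) (eps : R) (x : vec n) (w : Omega) (t : R) : vec n :=
  Xseq f Y eps x w (Z.to_nat (Int_part (t / eps))).

(** inf{ t >= 0 : dev t > delta } >= M   (inf of the empty set = +oo) *)
Definition exit_time_ge (dev : R -> R) (delta M : R) : Prop :=
  forall t, 0 <= t -> dev t > delta -> M <= t.

From Stdlib Require Import Reals Lra Lia ZArith List Classical ClassicalEpsilon
  FunctionalExtensionality PropExtensionality.
From Coquelicot Require Derive.
Open Scope R_scope.

(** On a horizon [[0, M]] the recursion is compared with an Euler scheme for the average ODE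
    whose drift is frozen at the points [Xc (i/p)] of a mesh.  Along the recursion the
    difference between [f] and [fbar] at a mesh point [z] is summed into the ergodic sums
    [sum_j (f (z, Y_(j+1)) - fbar z)]; by (A2) these grow sublinearly, almost surely at all of
    the countably many mesh points simultaneously.  Summation by parts bounds the frozen drift
    by these sums, and a discrete Gronwall argument, with Lipschitz constants on a neighbourhood
    of the compact average trajectory, makes the deviation uniformly small once [1/p], the
    sublinearity rate and [eps] are small: this is (i).  For (ii), continuity from below turns
    almost sure sublinearity into a uniform bound outside an event of small probability, and a
    diagonal choice of the horizon [T eps] lets it grow while the probabilities still vanish. *)

(** * Finite sums and norms on [R^n] *)

Lemma Rdiv_le_0_compat a b : 0 <= a -> 0 < b -> 0 <= a / b.
Proof. intros; unfold Rdiv; apply Rmult_le_pos; [|left; apply Rinv_0_lt_compat]; auto. Qed.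

Lemma rsum_ext (g h : nat -> R) k :
  (forall i, (i < k)%nat -> g i = h i) -> rsum g k = rsum h k.
Proof.
  induction k; simpl; intros H; auto.
  rewrite IHk, H by (intros; apply H || lia; lia); auto; lia.
Qed.

Lemma rsum_plus (g h : nat -> R) k : rsum (fun i => g i + h i) k = rsum g k + rsum h k.
Proof. induction k; simpl; [lra|]. rewrite IHk; lra. Qed.

Lemma rsum_minus (g h : nat -> R) k : rsum (fun i => g i - h i) k = rsum g k - rsum h k.
Proof. induction k; simpl; [lra|]. rewrite IHk; lra. Qed.

Lemma rsum_scal (c : R) (g : nat -> R) k : rsum (fun i => c * g i) k = c * rsum g k.
Proof. induction k; simpl; [lra|]. rewrite IHk; lra. Qed.

Lemma rsum_const (c : R) k : rsum (fun _ => c) k = INR k * c.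
Proof. induction k; simpl rsum; [simpl; lra|]. rewrite IHk, S_INR; lra. Qed.

Lemma rsum_zero k : rsum (fun _ => 0) k = 0.
Proof. rewrite rsum_const; ring. Qed.

Lemma rsum_le (g h : nat -> R) k :
  (forall i, (i < k)%nat -> g i <= h i) -> rsum g k <= rsum h k.
Proof.
  induction k; simpl; intros H; [lra|].
  assert (rsum g k <= rsum h k) by (apply IHk; intros; apply H; lia).
  assert (g k <= h k) by (apply H; lia). lra.
Qed.

Lemma rsum_nonneg (g : nat -> R) k : (forall i, (i < k)%nat -> 0 <= g i) -> 0 <= rsum g k.
Proof. intros H. rewrite <- (rsum_zero k). apply rsum_le; auto. Qed.

Lemma rsum_abs (g : nat -> R) k : Rabs (rsum g k) <= rsum (fun i => Rabs (g i)) k.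
Proof.
  induction k; simpl; [rewrite Rabs_R0; lra|].
  eapply Rle_trans; [apply Rabs_triang|lra].
Qed.

Lemma rsum_term_le (g : nat -> R) k i :
  (forall j, (j < k)%nat -> 0 <= g j) -> (i < k)%nat -> g i <= rsum g k.
Proof.
  induction k; intros H Hi; [lia|]. simpl.
  assert (0 <= rsum g k) by (apply rsum_nonneg; intros; apply H; lia).
  destruct (Nat.eq_dec i k); [subst; lra|].
  assert (g i <= rsum g k) by (apply IHk; [intros; apply H; lia|lia]).
  assert (0 <= g k) by (apply H; lia). lra.
Qed.

Lemma rsum_swap (a : nat -> nat -> R) k l :
  rsum (fun i => rsum (fun j => a i j) l) k = rsum (fun j => rsum (fun i => a i j) k) l.
Proof.
  induction k; simpl.
  - symmetry. apply rsum_zero.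
  - rewrite IHk, <- rsum_plus. reflexivity.
Qed.

Lemma vget_vadd {n} (u v : vec n) i : vget (vadd u v) i = vget u i + vget v i.
Proof. unfold vget, vadd. destruct (lt_dec i n); lra. Qed.

Lemma vget_vsub {n} (u v : vec n) i : vget (vsub u v) i = vget u i - vget v i.
Proof. unfold vget, vsub. destruct (lt_dec i n); lra. Qed.

Lemma vget_vscal {n} c (v : vec n) i : vget (vscal c v) i = c * vget v i.
Proof. unfold vget, vscal. destruct (lt_dec i n); lra. Qed.

Lemma vget_vsum {n} (g : nat -> vec n) N i :
  vget (vsum g N) i = rsum (fun k => vget (g k) i) (S N).
Proof. induction N; simpl; [lra|]. rewrite vget_vadd, IHN. simpl. lra. Qed.

Definition mkvec (n : nat) (g : nat -> R) : vec n := fun i _ => g i.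

Lemma vget_mkvec n g i : (i < n)%nat -> vget (mkvec n g) i = g i.
Proof. intros H. unfold vget, mkvec. destruct (lt_dec i n); [auto|lia]. Qed.

Definition norm1 (n : nat) (g : nat -> R) := rsum (fun i => Rabs (g i)) n.
Definition norm2 (n : nat) (g : nat -> R) := sqrt (rsum (fun i => g i ^ 2) n).

Lemma vnorm_norm2 {n} (v : vec n) : vnorm v = norm2 n (vget v).
Proof. reflexivity. Qed.

Lemma norm1_ext n g h : (forall i, (i < n)%nat -> g i = h i) -> norm1 n g = norm1 n h.
Proof. intros H; unfold norm1; apply rsum_ext; intros; rewrite H; auto. Qed.

Lemma norm2_ext n g h : (forall i, (i < n)%nat -> g i = h i) -> norm2 n g = norm2 n h.
Proof. intros H; unfold norm2; f_equal; apply rsum_ext; intros; rewrite H; auto. Qed.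

Lemma norm1_nonneg n g : 0 <= norm1 n g.
Proof. apply rsum_nonneg; intros; apply Rabs_pos. Qed.

Lemma norm1_zero n : norm1 n (fun _ => 0) = 0.
Proof.
  unfold norm1. transitivity (rsum (fun _ => 0) n); [|apply rsum_zero].
  apply rsum_ext; intros; apply Rabs_R0.
Qed.

Lemma norm1_add n g h : norm1 n (fun i => g i + h i) <= norm1 n g + norm1 n h.
Proof. unfold norm1. rewrite <- rsum_plus. apply rsum_le; intros; apply Rabs_triang. Qed.

Lemma norm1_scal n c g : norm1 n (fun i => c * g i) = Rabs c * norm1 n g.
Proof. unfold norm1. rewrite <- rsum_scal. apply rsum_ext; intros; apply Rabs_mult. Qed.

Lemma norm1_opp n g : norm1 n (fun i => - g i) = norm1 n g.
Proof. unfold norm1. apply rsum_ext; intros; apply Rabs_Ropp. Qed.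

Lemma norm1_sub n g h : norm1 n (fun i => g i - h i) <= norm1 n g + norm1 n h.
Proof.
  eapply Rle_trans; [apply (norm1_add n g (fun i => - h i))|]. rewrite norm1_opp; lra.
Qed.

Lemma norm1_sub_triangle n g h k :
  norm1 n (fun i => g i - k i) <= norm1 n (fun i => g i - h i) + norm1 n (fun i => h i - k i).
Proof. eapply Rle_trans; [|apply norm1_add]. right. apply norm1_ext. intros; lra. Qed.

Lemma abs_le_norm1 n g i : (i < n)%nat -> Rabs (g i) <= norm1 n g.
Proof. intros; apply (rsum_term_le (fun i => Rabs (g i))); auto. intros; apply Rabs_pos. Qed.

Lemma norm1_rsum n (a : nat -> nat -> R) k :
  norm1 n (fun i => rsum (fun j => a j i) k) <= rsum (fun j => norm1 n (a j)) k.
Proof.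
  unfold norm1. eapply Rle_trans; [apply rsum_le; intros; apply rsum_abs|].
  rewrite rsum_swap. apply Rle_refl.
Qed.

Lemma norm2_le_norm1 n g : norm2 n g <= norm1 n g.
Proof.
  unfold norm2. rewrite <- (sqrt_pow2 (norm1 n g)) by apply norm1_nonneg.
  apply sqrt_le_1_alt. unfold norm1. induction n; simpl; [lra|].
  assert (0 <= rsum (fun i => Rabs (g i)) n) by (apply rsum_nonneg; intros; apply Rabs_pos).
  assert (g n ^ 2 = Rabs (g n) ^ 2) by (rewrite <- !Rsqr_pow2; apply Rsqr_abs).
  assert (0 <= Rabs (g n)) by apply Rabs_pos. simpl in *. nra.
Qed.

Lemma abs_le_norm2 n g i : (i < n)%nat -> Rabs (g i) <= norm2 n g.
Proof.
  intros H. unfold norm2. rewrite <- sqrt_Rsqr_abs. apply sqrt_le_1_alt.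
  rewrite Rsqr_pow2. apply (rsum_term_le (fun i => g i ^ 2)); auto.
  intros; apply pow2_ge_0.
Qed.

Lemma norm1_le_norm2 n g : norm1 n g <= INR n * norm2 n g.
Proof. unfold norm1. rewrite <- rsum_const. apply rsum_le. intros. apply abs_le_norm2; auto. Qed.

Lemma norm2_scal n c g : norm2 n (fun i => c * g i) = Rabs c * norm2 n g.
Proof.
  unfold norm2. rewrite <- sqrt_Rsqr_abs, <- sqrt_mult_alt by apply Rle_0_sqr.
  f_equal. rewrite <- rsum_scal. apply rsum_ext. intros. rewrite Rsqr_pow2. ring.
Qed.

Lemma rsum_mul_le_norm2 n g h : rsum (fun i => g i * h i) n <= norm2 n g * norm2 n h.
Proof.
  set (A := rsum (fun i => g i ^ 2) n). set (B := rsum (fun i => h i ^ 2) n).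
  set (C := rsum (fun i => g i * h i) n).
  assert (HA : 0 <= A) by (apply rsum_nonneg; intros; apply pow2_ge_0).
  assert (HB : 0 <= B) by (apply rsum_nonneg; intros; apply pow2_ge_0).
  (* the discriminant of the nonnegative quadratic [l |-> sum (g + l h)^2] *)
  assert (Hq : forall l, 0 <= A + 2 * l * C + l ^ 2 * B).
  { intros l. replace (A + 2 * l * C + l ^ 2 * B) with (rsum (fun i => (g i + l * h i) ^ 2) n).
    - apply rsum_nonneg; intros; apply pow2_ge_0.
    - unfold A, B, C. rewrite <- !rsum_scal, <- !rsum_plus. apply rsum_ext. intros; ring. }
  assert (HC2 : C ^ 2 <= A * B).
  { destruct (Req_dec B 0) as [HB0|HB0].
    - assert (Hl : forall l, 0 <= A + 2 * l * C) by (intros l; specialize (Hq l); rewrite HB0 in Hq; lra).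
      destruct (Req_dec C 0) as [HC0|HC0]; [rewrite HC0; nra|].
      specialize (Hl (- (A + 1) / (2 * C))). field_simplify in Hl; auto. lra.
    - specialize (Hq (- C / B)).
      replace (A + 2 * (- C / B) * C + (- C / B) ^ 2 * B) with ((A * B - C ^ 2) / B) in Hq
        by (field; lra).
      assert (0 < B) by lra.
      assert (0 <= (A * B - C ^ 2) / B * B) by nra.
      replace ((A * B - C ^ 2) / B * B) with (A * B - C ^ 2) in * by (field; lra). lra. }
  unfold norm2. fold A B. rewrite <- sqrt_mult by auto.
  destruct (Rle_dec C 0); [assert (0 <= sqrt (A * B)) by apply sqrt_pos; lra|].
  rewrite <- (sqrt_pow2 C) by lra. apply sqrt_le_1_alt; nra.
Qed.

Lemma norm2_add n g h : norm2 n (fun i => g i + h i) <= norm2 n g + norm2 n h.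
Proof.
  assert (Hcs := rsum_mul_le_norm2 n g h).
  assert (Hg : 0 <= norm2 n g) by apply sqrt_pos.
  assert (Hh : 0 <= norm2 n h) by apply sqrt_pos.
  assert (Hsq : forall k, norm2 n k ^ 2 = rsum (fun i => k i ^ 2) n).
  { intros k. apply pow2_sqrt, rsum_nonneg. intros; apply pow2_ge_0. }
  assert (Hs : norm2 n (fun i => g i + h i) ^ 2 <= (norm2 n g + norm2 n h) ^ 2).
  { replace ((norm2 n g + norm2 n h) ^ 2)
      with (norm2 n g ^ 2 + norm2 n h ^ 2 + 2 * (norm2 n g * norm2 n h)) by ring.
    rewrite !Hsq.
    replace (rsum (fun i => (g i + h i) ^ 2) n) with
      (rsum (fun i => g i ^ 2) n + rsum (fun i => h i ^ 2) n + 2 * rsum (fun i => g i * h i) n).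
    - lra.
    - rewrite <- rsum_scal, <- !rsum_plus. apply rsum_ext; intros; ring. }
  assert (0 <= norm2 n (fun i => g i + h i)) by apply sqrt_pos.
  nra.
Qed.

Lemma vnorm_nonneg {n} (v : vec n) : 0 <= vnorm v.
Proof. apply sqrt_pos. Qed.

Lemma vnorm_sub_triangle {n} (a b c : vec n) :
  vnorm (vsub a c) <= vnorm (vsub a b) + vnorm (vsub b c).
Proof.
  rewrite !vnorm_norm2. eapply Rle_trans; [|apply norm2_add]. right. apply norm2_ext.
  intros i _. rewrite !vget_vsub. ring.
Qed.

Lemma vnorm_sub_sym {n} (a b : vec n) : vnorm (vsub a b) = vnorm (vsub b a).
Proof.
  rewrite !vnorm_norm2.
  replace (norm2 n (vget (vsub b a))) with (norm2 n (fun i => -1 * vget (vsub a b) i)).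
  - rewrite norm2_scal. replace (Rabs (-1)) with 1; [ring|].
    rewrite Rabs_left; lra.
  - apply norm2_ext. intros; rewrite !vget_vsub; ring.
Qed.

(** The [l^1] distance is the working metric of the estimates. *)
Definition dist1 {n} (a b : vec n) := norm1 n (fun c => vget a c - vget b c).

Lemma dist1_sym {n} (a b : vec n) : dist1 a b = dist1 b a.
Proof. unfold dist1. apply rsum_ext; intros; apply Rabs_minus_sym. Qed.

Lemma dist1_triangle {n} (a b c : vec n) : dist1 a c <= dist1 a b + dist1 b c.
Proof. apply norm1_sub_triangle. Qed.

Lemma vnorm_le_dist1 {n} (a b : vec n) : vnorm (vsub a b) <= dist1 a b.
Proof.
  rewrite vnorm_norm2. eapply Rle_trans; [apply norm2_le_norm1|].
  right. apply norm1_ext. intros; apply vget_vsub.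
Qed.

Lemma dist1_le_vnorm {n} (a b : vec n) : dist1 a b <= INR n * vnorm (vsub a b).
Proof.
  unfold dist1. rewrite vnorm_norm2. eapply Rle_trans; [apply norm1_le_norm2|].
  right. f_equal. apply norm2_ext; intros; rewrite vget_vsub; auto.
Qed.

Definition nat_floor (r : R) : nat := Z.to_nat (Int_part r).

Lemma nat_floor_spec r : 0 <= r -> INR (nat_floor r) <= r < INR (nat_floor r) + 1.
Proof.
  intros H. destruct (base_Int_part r) as [H1 H2].
  assert (Hz : (0 <= Int_part r)%Z).
  { apply le_IZR. destruct (Rle_dec 0 (IZR (Int_part r))); auto. exfalso.
    assert (Hn : (Int_part r < 0)%Z) by (apply lt_IZR; lra).
    assert (Hn' : (Int_part r <= -1)%Z) by lia. apply IZR_le in Hn'. lra. }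
  unfold nat_floor. rewrite INR_IZR_INZ, Z2Nat.id by auto. lra.
Qed.

Lemma nat_floor_le r s : 0 <= r -> r <= s -> (nat_floor r <= nat_floor s)%nat.
Proof.
  intros Hr Hrs. destruct (nat_floor_spec r Hr). destruct (nat_floor_spec s ltac:(lra)).
  destruct (le_lt_dec (nat_floor r) (nat_floor s)) as [|Hlt]; auto. exfalso.
  apply le_INR in Hlt. rewrite S_INR in Hlt. lra.
Qed.

Lemma le_nat_floor r (k : nat) : 0 <= r -> INR k <= r -> (k <= nat_floor r)%nat.
Proof.
  intros Hr Hk. destruct (nat_floor_spec r Hr). destruct (le_lt_dec k (nat_floor r)) as [|Hlt]; auto.
  exfalso. apply le_INR in Hlt. rewrite S_INR in Hlt. lra.
Qed.

(** * Events and probabilities *)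

Section Events.

Context {Omega : Type} {F : (Omega -> Prop) -> Prop}.

Lemma pred_ext (A B : Omega -> Prop) : (forall w, A w <-> B w) -> A = B.
Proof. intros H. apply functional_extensionality. intros w. apply propositional_extensionality. auto. Qed.

Lemma sigma_ext A B : F A -> (forall w, A w <-> B w) -> F B.
Proof. intros HA H. rewrite <- (pred_ext A B H). auto. Qed.

Hypothesis HF : is_sigma_algebra F.

Lemma sigma_full : F (fun _ => True).
Proof. apply HF. Qed.

Lemma sigma_compl A : F A -> F (fun w => ~ A w).
Proof. apply HF. Qed.

Lemma sigma_union (A : nat -> Omega -> Prop) : (forall k, F (A k)) -> F (fun w => exists k, A k w).
Proof. apply HF. Qed.

Lemma sigma_empty : F (fun _ => False).
Proof. apply (sigma_ext (fun w => ~ True)); [apply sigma_compl, sigma_full|tauto]. Qed.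

Lemma sigma_or A B : F A -> F B -> F (fun w => A w \/ B w).
Proof.
  intros HA HB. eapply sigma_ext.
  - apply (sigma_union (fun k => match k with O => A | _ => B end)). intros [|k]; auto.
  - intros w; split; [intros [[|k] H]; auto|].
    intros [H|H]; [exists O|exists 1%nat]; auto.
Qed.

Lemma sigma_and A B : F A -> F B -> F (fun w => A w /\ B w).
Proof.
  intros HA HB. apply (sigma_ext (fun w => ~ (~ A w \/ ~ B w))).
  - apply sigma_compl, sigma_or; apply sigma_compl; auto.
  - intros w; tauto.
Qed.

Lemma sigma_inter (A : nat -> Omega -> Prop) : (forall k, F (A k)) -> F (fun w => forall k, A k w).
Proof.
  intros HA. apply (sigma_ext (fun w => ~ exists k, ~ A k w)).
  - apply sigma_compl, sigma_union. intros k; apply sigma_compl; auto.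
  - intros w. split; [|intros H [k Hk]; auto].
    intros H k. apply NNPP. intros H'. apply H. eauto.
Qed.

Lemma sigma_const (Q : Prop) : F (fun _ => Q).
Proof.
  destruct (classic Q).
  - apply (sigma_ext (fun _ => True)); [apply sigma_full|tauto].
  - apply (sigma_ext (fun _ => False)); [apply sigma_empty|tauto].
Qed.

Lemma sigma_const_and (Q : Prop) A : (Q -> F A) -> F (fun w => Q /\ A w).
Proof.
  intros H. destruct (classic Q).
  - apply (sigma_ext A); [auto|tauto].
  - apply (sigma_ext (fun _ => False)); [apply sigma_empty|tauto].
Qed.

Lemma sigma_const_imp (Q : Prop) A : (Q -> F A) -> F (fun w => Q -> A w).
Proof.
  intros H. destruct (classic Q).
  - apply (sigma_ext A); [auto|tauto].
  - apply (sigma_ext (fun _ => True)); [apply sigma_full|tauto].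
Qed.

Lemma least_witness (Q : nat -> Prop) k : Q k -> exists k', Q k' /\ forall j, (j < k')%nat -> ~ Q j.
Proof.
  revert Q. induction k as [k IH] using (well_founded_induction lt_wf). intros Q Hk.
  destruct (classic (exists j, (j < k)%nat /\ Q j)) as [[j [Hj HQ]]|Hn].
  - apply (IH j Hj Q HQ).
  - exists k. split; auto. intros j Hj HQ. apply Hn. eauto.
Qed.

Definition first_hit (A : nat -> Omega -> Prop) k w := A k w /\ ~ exists j, (j < k)%nat /\ A j w.

Lemma first_hit_disjoint A i j w : i <> j -> first_hit A i w -> first_hit A j w -> False.
Proof.
  intros Hij [Hi Hi'] [Hj Hj']. destruct (Nat.lt_gt_cases i j) as [[Hl|Hl] _]; auto.
  - apply Hj'; eauto.
  - apply Hi'; eauto.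
Qed.

Lemma first_hit_union A w : (exists k, first_hit A k w) <-> exists k, A k w.
Proof.
  split; [intros [k [Hk _]]; eauto|].
  intros [k Hk]. destruct (least_witness (fun k => A k w) k Hk) as [k' [Hk' Hl]].
  exists k'. split; auto. intros [j [Hj Hj']]. eapply Hl; eauto.
Qed.

Lemma sigma_first_hit A : (forall k, F (A k)) -> forall k, F (first_hit A k).
Proof.
  intros HA k. apply sigma_and; auto. apply sigma_compl, sigma_union.
  intros j. apply sigma_const_and; auto.
Qed.

End Events.

Lemma sum_f_R0_const c n : sum_f_R0 (fun _ => c) n = INR (S n) * c.
Proof. induction n; simpl sum_f_R0; [simpl; lra|]. rewrite IHn, (S_INR (S n)). lra. Qed.

Lemma infinite_sum_eventually_zero (s : nat -> R) K :
  (forall k, (K < k)%nat -> s k = 0) -> infinite_sum s (sum_f_R0 s K).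
Proof.
  intros H e He. exists K. intros k Hk. unfold Rdist.
  replace (sum_f_R0 s k) with (sum_f_R0 s K); [rewrite Rminus_diag, Rabs_R0; lra|].
  induction Hk; auto. simpl. rewrite H by lia. lra.
Qed.

Section Probability.

Context {Omega : Type} {F : (Omega -> Prop) -> Prop} {P : (Omega -> Prop) -> R}.
Hypothesis HF : is_sigma_algebra F.
Hypothesis HP : is_probability F P.

Lemma prob_nonneg A : F A -> 0 <= P A.
Proof. apply HP. Qed.

Lemma prob_empty : P (fun _ => False) = 0.
Proof.
  destruct HP as [_ [Hpos [_ Hadd]]].
  assert (H := Hadd (fun _ _ => False) (fun _ => (sigma_empty HF)) ltac:(auto)). cbv beta in H.
  replace (fun w : Omega => exists k : nat, False) with (fun _ : Omega => False) in H
    by (apply pred_ext; intros w; split; [tauto|intros [_ []]]).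
  set (c := P (fun _ => False)) in *.
  assert (Hc : 0 <= c) by (apply Hpos, (sigma_empty HF)).
  (* the series [c + c + ...] can only converge to [c] if [c = 0] *)
  destruct Hc as [Hc|Hc]; [exfalso|auto].
  destruct (H (c / 2) ltac:(lra)) as [N HN]. specialize (HN (S N) ltac:(lia)).
  rewrite sum_f_R0_const in HN. unfold Rdist in HN.
  assert (0 <= INR N) by apply pos_INR. rewrite !S_INR in HN.
  rewrite Rabs_right in HN; [nra|apply Rle_ge; nra].
Qed.

Lemma prob_union2 A B : F A -> F B -> (forall w, A w -> B w -> False) ->
  P (fun w => A w \/ B w) = P A + P B.
Proof.
  intros HA HB Hd. destruct HP as [_ [_ [_ Hadd]]].
  set (S := fun k : nat => match k with O => A | 1%nat => B | _ => fun _ : Omega => False end).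
  assert (HS : forall k, F (S k)) by (intros [|[|k]]; simpl; auto; apply (sigma_empty HF)).
  assert (Hdis : forall i j w, i <> j -> S i w -> S j w -> False)
    by (intros [|[|i]] [|[|j]] w Hij; simpl; try tauto; try lia; eauto).
  specialize (Hadd S HS Hdis).
  replace (fun w => exists k, S k w) with (fun w => A w \/ B w) in Hadd.
  - eapply uniqueness_sum; [apply Hadd|].
    replace (P A + P B) with (sum_f_R0 (fun k => P (S k)) 1) by (simpl; ring).
    apply infinite_sum_eventually_zero.
    intros [|[|k]] Hk; try lia. apply prob_empty.
  - apply pred_ext. intros w; split.
    + intros [H|H]; [exists O|exists 1%nat]; auto.
    + intros [[|[|k]] Hk]; simpl in Hk; tauto.
Qed.

Lemma prob_mono A B : F A -> F B -> (forall w, A w -> B w) -> P A <= P B.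
Proof.
  intros HA HB H.
  assert (HC : F (fun w => B w /\ ~ A w)) by (apply (sigma_and HF); auto; apply (sigma_compl HF); auto).
  replace B with (fun w => A w \/ (B w /\ ~ A w))
    by (apply pred_ext; intros w; destruct (classic (A w)); intuition).
  rewrite prob_union2; auto; [|intros w ? [? ?]; auto].
  assert (0 <= P (fun w => B w /\ ~ A w)) by (apply prob_nonneg; auto). lra.
Qed.

Lemma prob_compl A : F A -> P (fun w => ~ A w) = 1 - P A.
Proof.
  intros HA. pose proof HP as [_ [_ [H1 _]]].
  replace (fun _ : Omega => True) with (fun w => A w \/ ~ A w) in H1
    by (apply pred_ext; intros; tauto).
  rewrite prob_union2 in H1; auto; [lra|apply (sigma_compl HF); auto].
Qed.

Lemma almost_surely_impl (Q Q' : Omega -> Prop) :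
  almost_surely F P Q -> (forall w, Q w -> Q' w) -> almost_surely F P Q'.
Proof. intros [N [H1 [H2 H3]]] H. exists N. auto. Qed.

Lemma null_union (N : nat -> Omega -> Prop) : (forall k, F (N k)) -> (forall k, P (N k) = 0) ->
  F (fun w => exists k, N k w) /\ P (fun w => exists k, N k w) = 0.
Proof.
  intros HN H0. pose proof HP as [_ [Hpos [_ Hadd]]].
  split; [apply (sigma_union HF); auto|].
  specialize (Hadd (first_hit N) (sigma_first_hit HF N HN) (first_hit_disjoint N)).
  replace (fun w => exists k, first_hit N k w) with (fun w => exists k, N k w) in Hadd
    by (apply pred_ext; intros w; symmetry; apply first_hit_union).
  assert (Hz : forall k, P (first_hit N k) = 0).
  { intros k. apply Rle_antisym; [rewrite <- (H0 k)|apply Hpos, (sigma_first_hit HF); auto].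
    apply prob_mono; [apply (sigma_first_hit HF); auto|auto|intros w [? ?]; auto]. }
  eapply uniqueness_sum; [apply Hadd|].
  replace 0 with (sum_f_R0 (fun k => P (first_hit N k)) 0) by (simpl; auto).
  apply infinite_sum_eventually_zero. auto.
Qed.

Lemma almost_surely_forall_nat (Q : nat -> Omega -> Prop) :
  (forall k, almost_surely F P (Q k)) -> almost_surely F P (fun w => forall k, Q k w).
Proof.
  intros H. destruct (choice (fun k N => F N /\ P N = 0 /\ forall w, ~ N w -> Q k w) H) as [N HN].
  destruct (null_union N) as [HU HU0]; [apply HN|apply HN|].
  exists (fun w => exists k, N k w). repeat split; auto.
  intros w Hw k. apply HN. intros Hk. apply Hw; eauto.
Qed.

Lemma almost_surely_inhabited (Q : Omega -> Prop) : almost_surely F P Q -> exists w, Q w.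
Proof.
  intros [N [HN [HN0 HQ]]]. apply NNPP. intros Hn.
  assert (P (fun _ => True) <= P N)
    by (apply prob_mono; auto; [apply (sigma_full HF)|intros w _; apply NNPP; intros H; eauto]).
  destruct HP as [_ [_ [H1 _]]]. lra.
Qed.

Lemma prob_increasing_union (W : nat -> Omega -> Prop) :
  (forall j, F (W j)) -> (forall j w, W j w -> W (S j) w) ->
  almost_surely F P (fun w => exists j, W j w) ->
  forall eta, 0 < eta -> exists j, P (fun w => ~ W j w) < eta.
Proof.
  intros HW Hinc Has eta Heta. pose proof HP as [_ [_ [_ Hadd]]].
  assert (Hmon : forall j j' w, (j <= j')%nat -> W j w -> W j' w)
    by (intros j j' w Hj; induction Hj; auto).
  assert (Hfirst : forall k w, first_hit W (S k) w <-> W (S k) w /\ ~ W k w).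
  { intros k w. unfold first_hit. split.
    - intros [H1 H2]. split; auto. intros H. apply H2. exists k. auto.
    - intros [H1 H2]. split; auto. intros [j [Hj Hj']]. apply H2. apply (Hmon j); auto; lia. }
  specialize (Hadd (first_hit W) (sigma_first_hit HF W HW) (first_hit_disjoint W)).
  assert (Hpart : forall j, sum_f_R0 (fun k => P (first_hit W k)) j = P (W j)).
  { induction j; simpl sum_f_R0.
    - f_equal. apply pred_ext. intros w. unfold first_hit. split; [tauto|].
      intros H. split; auto. intros [j [Hj _]]. lia.
    - rewrite IHj, <- prob_union2; [| |apply (sigma_first_hit HF); auto|].
      + f_equal. apply pred_ext. intros w. rewrite Hfirst.
        split; [intros [H|[H _]]; auto|]. intros H. destruct (classic (W j w)); auto.
      + auto.
      + intros w H1 H2. apply Hfirst in H2. tauto. }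
  replace (fun w => exists k, first_hit W k w) with (fun w => exists k, W k w) in Hadd
    by (apply pred_ext; intros w; symmetry; apply first_hit_union).
  assert (HU1 : P (fun w => exists k, W k w) = 1).
  { destruct Has as [N [HN [HN0 HNQ]]].
    apply Rle_antisym.
    - pose proof HP as [_ [_ [H1 _]]]. rewrite <- H1.
      apply prob_mono; [apply (sigma_union HF)|apply (sigma_full HF)|]; auto.
    - replace 1 with (1 - P N) by lra. rewrite <- prob_compl by auto.
      apply prob_mono; auto; [apply (sigma_compl HF)|apply (sigma_union HF)]; auto. }
  rewrite HU1 in Hadd. destruct (Hadd eta Heta) as [j Hj]. exists j.
  specialize (Hj j (le_n _)). rewrite Hpart in Hj. unfold Rdist in Hj.
  rewrite prob_compl by auto. apply Rabs_def2 in Hj. lra.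
Qed.

End Probability.

(** * Measurability *)

Lemma is_open_exists {n} (I : Type) (U : I -> vec n -> Prop) :
  (forall i, is_open (U i)) -> is_open (fun v => exists i, U i v).
Proof.
  intros H x [i Hi]. destruct (H i x Hi) as [r [Hr Hr']].
  exists r; split; auto. intros y Hy; exists i; auto.
Qed.

Lemma is_open_const_and {n} (Q : Prop) (U : vec n -> Prop) : is_open U -> is_open (fun v => Q /\ U v).
Proof. intros H x [HQ Hx]. destruct (H x Hx) as [r [Hr Hr']]. exists r; split; auto. Qed.

Lemma is_open_vnorm_gt {n} (c : vec n) (delta : R) : is_open (fun v => vnorm (vsub v c) > delta).
Proof.
  intros x Hx. exists (vnorm (vsub x c) - delta). split; [lra|]. intros y Hy.
  assert (H := vnorm_sub_triangle x y c). rewrite (vnorm_sub_sym x y) in H. lra.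
Qed.

Lemma is_open_norm1_gt {n} (a : R) : is_open (fun v : vec n => norm1 n (vget v) > a).
Proof.
  intros x Hx. assert (0 <= INR n) by apply pos_INR.
  exists ((norm1 n (vget x) - a) / (INR n + 1)). split; [apply Rdiv_lt_0_compat; lra|].
  intros y Hy.
  assert (H1 : norm1 n (vget x) <= dist1 x y + norm1 n (vget y)).
  { unfold dist1. eapply Rle_trans; [|apply norm1_add]. right. apply norm1_ext. intros; ring. }
  assert (H2 := dist1_le_vnorm x y). rewrite vnorm_sub_sym in H2.
  apply (Rmult_lt_compat_l (INR n + 1)) in Hy; [|lra]. field_simplify in Hy; [|lra].
  assert (0 <= vnorm (vsub y x)) by apply vnorm_nonneg. nra.
Qed.

Lemma finite_min (g : nat -> R) n :
  (forall i, (i < n)%nat -> 0 < g i) -> exists r, 0 < r /\ forall i, (i < n)%nat -> r <= g i.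
Proof.
  induction n; intros H; [exists 1; split; [lra|intros; lia]|].
  destruct IHn as [r [Hr Hr']]; [intros; apply H; lia|].
  exists (Rmin r (g n)). split; [apply Rmin_pos; auto; apply H; lia|].
  intros i Hi. destruct (Nat.eq_dec i n); [subst; apply Rmin_r|].
  eapply Rle_trans; [apply Rmin_l|apply Hr'; lia].
Qed.

Definition open_box (n : nat) (q : nat -> R) (r : R) (a : vec n) : Prop :=
  forall i, (i < n)%nat -> Rabs (vget a i - q i) < r.

Lemma open_box_open n q r : is_open (open_box n q r).
Proof.
  intros x Hx. destruct (finite_min (fun i => r - Rabs (vget x i - q i)) n) as [r' [Hr' Hr'']].
  { intros i Hi; specialize (Hx i Hi); lra. }
  exists r'. split; auto. intros y Hy i Hi.
  assert (H1 := abs_le_norm2 n (vget (vsub y x)) i Hi). rewrite <- vnorm_norm2, vget_vsub in H1.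
  specialize (Hr'' i Hi). simpl in Hr''.
  replace (vget y i - q i) with ((vget y i - vget x i) + (vget x i - q i)) by ring.
  eapply Rle_lt_trans; [apply Rabs_triang|lra].
Qed.

Lemma open_box_ext n q q' r a :
  (forall i, (i < n)%nat -> q i = q' i) -> open_box n q r a -> open_box n q' r a.
Proof. intros H Hb i Hi. rewrite <- H; auto. Qed.

Lemma open_box_diam n q r (a b : vec n) :
  open_box n q r a -> open_box n q r b -> vnorm (vsub a b) <= INR n * (2 * r).
Proof.
  intros Ha Hb. eapply Rle_trans; [apply vnorm_le_dist1|].
  unfold dist1, norm1. rewrite <- rsum_const. apply rsum_le. intros i Hi.
  specialize (Ha i Hi). specialize (Hb i Hi).
  replace (vget a i - vget b i) with ((vget a i - q i) - (vget b i - q i)) by ring.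
  eapply Rle_trans; [apply Rabs_triang|]. rewrite Rabs_Ropp. lra.
Qed.

Definition grid_floor {n} (rho : R) (v : vec n) : nat -> R := fun i => IZR (Int_part (vget v i / rho)) * rho.

Lemma open_box_grid n rho (v : vec n) : 0 < rho -> open_box n (grid_floor rho v) rho v.
Proof.
  intros Hr i _. unfold grid_floor. set (a := vget v i). destruct (base_Int_part (a / rho)) as [H1 H2].
  apply (Rmult_le_compat_r rho) in H1; [|lra].
  assert (H3 : a / rho < IZR (Int_part (a / rho)) + 1) by lra.
  apply (Rmult_lt_compat_r rho) in H3; [|lra].
  replace (a / rho * rho) with a in * by (field; lra).
  rewrite Rabs_right; lra.
Qed.

Lemma jointly_continuous_shift {n m} (h : vec n -> vec m -> vec n) :
  jointly_continuous h -> jointly_continuous (fun u y => vadd u (h u y)).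
Proof.
  intros Hh u y e He. destruct (Hh u y (e / 2)) as [d [Hd Hd']]; [lra|].
  exists (Rmin d (e / 2)). split; [apply Rmin_pos; lra|].
  intros u' y' Hu Hy.
  assert (vnorm (vsub u' u) < e / 2) by (eapply Rlt_le_trans; [apply Hu|apply Rmin_r]).
  assert (vnorm (vsub (h u' y') (h u y)) < e / 2).
  { apply Hd'; [apply (Rlt_le_trans _ _ _ Hu)|apply (Rlt_le_trans _ _ _ Hy)]; apply Rmin_l. }
  apply Rle_lt_trans with (vnorm (vsub u' u) + vnorm (vsub (h u' y') (h u y))); [|lra].
  rewrite !vnorm_norm2. eapply Rle_trans; [|apply norm2_add]. right. apply norm2_ext.
  intros i _. rewrite !vget_vsub, !vget_vadd. ring.
Qed.

Lemma jointly_continuous_scal {n m} (f : vec n -> vec m -> vec n) (a : R) :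
  jointly_continuous f -> jointly_continuous (fun u y => vscal a (f u y)).
Proof.
  intros Hf u y e He. assert (Ha := Rabs_pos a).
  destruct (Hf u y (e / (Rabs a + 1))) as [d [Hd Hd']]; [apply Rdiv_lt_0_compat; lra|].
  exists d. split; auto. intros u' y' Hu Hy. specialize (Hd' u' y' Hu Hy).
  replace (vnorm (vsub (vscal a (f u' y')) (vscal a (f u y))))
    with (Rabs a * vnorm (vsub (f u' y') (f u y))).
  - assert (Rabs a * (e / (Rabs a + 1)) < e)
      by (apply (Rmult_lt_reg_r (Rabs a + 1)); [lra|field_simplify; lra]).
    assert (Rabs a * vnorm (vsub (f u' y') (f u y)) <= Rabs a * (e / (Rabs a + 1)))
      by (apply Rmult_le_compat_l; lra).
    lra.
  - rewrite !vnorm_norm2, <- norm2_scal. apply norm2_ext. intros; rewrite !vget_vsub, !vget_vscal. ring.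
Qed.

Lemma jointly_continuous_freeze {n m} (f : vec n -> vec m -> vec n) (z c : vec n) :
  jointly_continuous f -> jointly_continuous (fun (_ : vec n) y => vsub (f z y) c).
Proof.
  intros Hf u y e He. destruct (Hf z y e He) as [d [Hd Hd']]. exists d. split; auto.
  intros u' y' _ Hy.
  replace (vnorm (vsub (vsub (f z y') c) (vsub (f z y) c))) with (vnorm (vsub (f z y') (f z y))).
  - apply Hd'; auto. replace (vnorm (vsub z z)) with 0; auto.
    rewrite vnorm_norm2. unfold norm2. rewrite <- sqrt_0. f_equal.
    rewrite <- (rsum_zero n). apply rsum_ext; intros. rewrite vget_vsub. ring.
  - rewrite !vnorm_norm2. apply norm2_ext; intros. rewrite !vget_vsub. ring.
Qed.

Lemma jointly_continuous_grid_cell {n m} (g : vec n -> vec m -> vec n) (U : vec n -> Prop) :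
  jointly_continuous g -> is_open U -> forall a0 b0, U (g a0 b0) ->
  exists p : nat, forall a b, open_box n (grid_floor (/ INR (S p)) a0) (/ INR (S p)) a ->
    open_box m (grid_floor (/ INR (S p)) b0) (/ INR (S p)) b -> U (g a b).
Proof.
  intros Hg HU a0 b0 Hw. destruct (HU _ Hw) as [r [Hr Hr']].
  destruct (Hg a0 b0 r Hr) as [d [Hd Hd']].
  assert (Hnm : 0 <= INR n /\ 0 <= INR m) by (split; apply pos_INR).
  destruct (archimed_cor1 (d / (2 * (INR n + INR m + 1)))) as [N [HN HN0]];
    [apply Rdiv_lt_0_compat; lra|].
  destruct N as [|p]; [lia|]. exists p. set (rho := / INR (S p)) in *.
  assert (Hrho : 0 < rho) by (apply Rinv_0_lt_compat, lt_0_INR; lia).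
  assert (Hrho2 : 2 * rho * (INR n + INR m + 1) < d).
  { apply (Rmult_lt_compat_r (2 * (INR n + INR m + 1))) in HN; [|lra].
    replace (d / (2 * (INR n + INR m + 1)) * (2 * (INR n + INR m + 1))) with d in HN by (field; lra).
    lra. }
  intros a b Ha Hb. apply Hr', Hd'.
  - eapply Rle_lt_trans; [apply (open_box_diam _ _ _ _ _ Ha (open_box_grid n rho a0 Hrho))|nra].
  - eapply Rle_lt_trans; [apply (open_box_diam _ _ _ _ _ Hb (open_box_grid m rho b0 Hrho))|nra].
Qed.

Section Measurability.

Context {Omega : Type} {F : (Omega -> Prop) -> Prop}.
Hypothesis HF : is_sigma_algebra F.

Lemma random_vec_const {n} (c : vec n) : random_vec F (fun _ => c).
Proof. intros U _. apply sigma_const; auto. Qed.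

Lemma sigma_exists_Z (A : Z -> Omega -> Prop) : (forall a, F (A a)) -> F (fun w => exists a, A a w).
Proof.
  intros HA.
  apply (sigma_ext (fun w => exists k : nat, A (Z.of_nat k) w \/ A (- Z.of_nat k)%Z w)).
  - apply sigma_union; auto. intros k; apply sigma_or; auto.
  - intros w; split; [intros [k [H|H]]; eauto|].
    intros [a Ha]. exists (Z.abs_nat a).
    destruct (Z_le_gt_dec 0 a); [left|right]; rewrite ?Nat2Z.inj_abs_nat, ?Z.abs_eq, ?Z.abs_neq by lia.
    + auto.
    + rewrite Z.opp_involutive. auto.
Qed.

(** The union over [z] is countable since only [z 0], ..., [z (d-1)] matter. *)
Lemma sigma_exists_Zseq (d : nat) (A : (nat -> Z) -> Omega -> Prop) :
  (forall z, F (A z)) ->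
  (forall z z' w, (forall i, (i < d)%nat -> z i = z' i) -> A z w -> A z' w) ->
  F (fun w => exists z, A z w).
Proof.
  revert A. induction d; intros A HA Hd.
  - apply (sigma_ext (A (fun _ => 0%Z))); auto. intros w; split; [eauto|].
    intros [z Hz]. eapply Hd; [|eauto]. intros; lia.
  - set (zcons := fun (a : Z) (z : nat -> Z) (i : nat) => match i with O => a | S i' => z i' end).
    apply (sigma_ext (fun w => exists a, exists z, A (zcons a z) w)).
    + apply sigma_exists_Z. intros a. apply (IHd (fun z => A (zcons a z))); auto.
      intros z z' w Hzz'. apply Hd. intros [|i] Hi; simpl; auto. apply Hzz'. lia.
    + intros w; split; [intros [a [z Hz]]; eauto|].
      intros [z Hz]. exists (z O), (fun i => z (S i)).
      eapply Hd; [|eauto]. intros [|i] _; reflexivity.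
Qed.

(** The preimage of an open set is the union of the grid cells (of mesh [1/(p+1)]) whose
    image under [g] lies in it. *)
Lemma random_vec_comp {n m} (A : Omega -> vec n) (B : Omega -> vec m) (g : vec n -> vec m -> vec n) :
  random_vec F A -> random_vec F B -> jointly_continuous g -> random_vec F (fun w => g (A w) (B w)).
Proof.
  intros HA HB Hg U HU.
  set (rho := fun p : nat => / INR (S p)).
  set (c := fun (p : nat) (z : nat -> Z) (i : nat) => IZR (z i) * rho p).
  set (cell := fun (p : nat) (za zb : nat -> Z) (w : Omega) =>
    (forall a b, open_box n (c p za) (rho p) a -> open_box m (c p zb) (rho p) b -> U (g a b)) /\
    open_box n (c p za) (rho p) (A w) /\ open_box m (c p zb) (rho p) (B w)).
  assert (Hcell : forall p za za' zb zb' w, (forall i, (i < n)%nat -> za i = za' i) ->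
    (forall i, (i < m)%nat -> zb i = zb' i) -> cell p za zb w -> cell p za' zb' w).
  { intros p za za' zb zb' w Ha Hb [Hg' [H1 H2]].
    assert (Ea : forall i, (i < n)%nat -> c p za i = c p za' i) by (intros; unfold c; rewrite Ha; auto).
    assert (Eb : forall i, (i < m)%nat -> c p zb i = c p zb' i) by (intros; unfold c; rewrite Hb; auto).
    split; [|split; eapply open_box_ext; eauto].
    intros a b Ha' Hb'. apply Hg'.
    - apply (open_box_ext n (c p za')); auto. intros; symmetry; auto.
    - apply (open_box_ext m (c p zb')); auto. intros; symmetry; auto. }
  apply (sigma_ext (fun w => exists p za zb, cell p za zb w)).
  - apply (sigma_union HF). intros p.
    apply (sigma_exists_Zseq n); [intros za|intros za za' w Hz [zb Hc]; exists zb; eauto].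
    apply (sigma_exists_Zseq m); [intros zb|intros zb zb' w Hz Hc; eauto].
    apply (sigma_const_and HF). intros _.
    apply (sigma_and HF); [apply HA|apply HB]; apply open_box_open.
  - intros w. split; [intros [p [za [zb [Hg' [H1 H2]]]]]; auto|].
    intros Hw. destruct (jointly_continuous_grid_cell g U Hg HU (A w) (B w) Hw) as [p Hp].
    assert (Hrho : 0 < rho p) by (apply Rinv_0_lt_compat, lt_0_INR; lia).
    exists p, (fun i => Int_part (vget (A w) i / rho p)), (fun i => Int_part (vget (B w) i / rho p)).
    split; [apply Hp|split; apply open_box_grid; auto].
Qed.

Lemma random_vec_Xseq {n m} (f : vec n -> vec m -> vec n) (Y : nat -> Omega -> vec m) eps x :
  jointly_continuous f -> (forall k, random_vec F (Y k)) ->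
  forall k, random_vec F (fun w => Xseq f Y eps x w k).
Proof.
  intros Hf HY k. induction k; [change (random_vec F (fun _ => x)); apply random_vec_const|].
  apply (random_vec_comp (fun w => Xseq f Y eps x w k) (Y (S k))
    (fun u y => vadd u (vscal eps (f u y)))); auto.
  apply jointly_continuous_shift, jointly_continuous_scal; auto.
Qed.

Lemma event_deviation {n m} (f : vec n -> vec m -> vec n) (Y : nat -> Omega -> vec m)
  (x : vec n) (Xc : R -> vec n) eps T delta :
  jointly_continuous f -> (forall k, random_vec F (Y k)) ->
  F (fun w => exists t, 0 <= t <= T /\ vnorm (vsub (Xcont f Y eps x w t) (Xc t)) > delta).
Proof.
  intros Hf HY.
  set (near_k := fun (k : nat) (v : vec n) => exists t,
         (0 <= t <= T /\ nat_floor (t / eps) = k) /\ vnorm (vsub v (Xc t)) > delta).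
  apply (sigma_ext (fun w => exists k, near_k k (Xseq f Y eps x w k))).
  - apply (sigma_union HF). intros k. apply (random_vec_Xseq f Y eps x Hf HY k (near_k k)).
    apply is_open_exists. intros t. apply is_open_const_and, is_open_vnorm_gt.
  - intros w. split.
    + intros [k [t [[Ht Hk] Hd]]]. exists t. split; auto. unfold Xcont. subst k. apply Hd.
    + intros [t [Ht Hd]]. eexists; exists t; eauto.
Qed.

End Measurability.

(** * Compactness of cubes *)

Definition closed_box (n : nat) (lo hi : nat -> R) (v : vec n) : Prop :=
  forall i, (i < n)%nat -> lo i <= vget v i <= hi i.

Definition cube (n : nat) (r : R) (v : vec n) : Prop := forall i, (i < n)%nat -> Rabs (vget v i) <= r.

Lemma cube_mono n r r' (z : vec n) : r <= r' -> cube n r z -> cube n r' z.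
Proof. intros H Hz i Hi. specialize (Hz i Hi). lra. Qed.

Lemma cube_near n r (z a : vec n) : cube n r a -> dist1 z a <= 1 -> cube n (r + 1) z.
Proof.
  intros Ha Hz i Hi. specialize (Ha i Hi).
  assert (H := abs_le_norm1 n (fun c => vget z c - vget a c) i Hi).
  replace (vget z i) with ((vget z i - vget a i) + vget a i) by ring.
  unfold dist1 in Hz. eapply Rle_trans; [apply Rabs_triang|lra].
Qed.

Definition update_coord (g : nat -> R) (c : nat) (v : R) : nat -> R := fun i => if Nat.eqb i c then v else g i.

Lemma Un_cv_le (u : nat -> R) l b : Un_cv u l -> (forall k, u k <= b) -> l <= b.
Proof.
  intros Hc Hb. destruct (Rle_dec l b); auto. exfalso.
  destruct (Hc (l - b)) as [N HN]; [lra|]. specialize (HN N (le_n N)). specialize (Hb N).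
  unfold Rdist in HN. apply Rabs_def2 in HN. lra.
Qed.

Lemma INR_succ_le_pow2 k : INR (S k) <= 2 ^ k.
Proof.
  induction k; [simpl; lra|]. rewrite !S_INR in *. simpl pow.
  assert (0 <= INR k) by apply pos_INR. lra.
Qed.

Section CubeCompact.

Variables (n : nat) (I : Type) (U : I -> vec n -> Prop).

Definition box_covered (lo hi : nat -> R) : Prop :=
  exists l : list I, forall x, closed_box n lo hi x -> exists i, In i l /\ U i x.

Definition box_halves (lo hi lo' hi' : nat -> R) : Prop :=
  forall i, (i < n)%nat -> lo i <= lo' i /\ hi' i <= hi i /\ hi' i - lo' i = (hi i - lo i) / 2.

Lemma box_covered_split lo hi c : (c < n)%nat ->
  box_covered lo (update_coord hi c ((lo c + hi c) / 2)) -> box_covered (update_coord lo c ((lo c + hi c) / 2)) hi ->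
  box_covered lo hi.
Proof.
  intros Hc [l1 Hl1] [l2 Hl2]. exists (l1 ++ l2). intros x Hx.
  destruct (Rle_dec (vget x c) ((lo c + hi c) / 2)).
  - destruct (Hl1 x) as [i [Hi Hi']]; [|exists i; split; auto; apply in_or_app; auto].
    intros j Hj. unfold update_coord. destruct (Nat.eqb_spec j c); [subst; split|]; try apply Hx; auto.
  - destruct (Hl2 x) as [i [Hi Hi']]; [|exists i; split; auto; apply in_or_app; auto].
    intros j Hj. unfold update_coord. destruct (Nat.eqb_spec j c); [subst; split; [lra|]|]; apply Hx; auto.
Qed.

(** Halving the coordinates one at a time keeps some half uncovered. *)
Lemma box_halve_uncovered lo hi : (forall i, (i < n)%nat -> lo i <= hi i) -> ~ box_covered lo hi ->
  exists lo' hi', ~ box_covered lo' hi' /\ box_halves lo hi lo' hi'.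
Proof.
  intros Hle Hb.
  assert (Hc : forall c, (c <= n)%nat -> exists lo' hi', ~ box_covered lo' hi' /\
    forall i, (i < n)%nat ->
      ((i < c)%nat -> lo i <= lo' i /\ hi' i <= hi i /\ hi' i - lo' i = (hi i - lo i) / 2) /\
      ((c <= i)%nat -> lo' i = lo i /\ hi' i = hi i)).
  { induction c; intros Hcn.
    - exists lo, hi. split; auto. intros i Hi. split; intros; [lia|auto].
    - destruct IHc as [lo1 [hi1 [Hb1 H1]]]; [lia|].
      assert (Hsplit : ~ box_covered lo1 (update_coord hi1 c ((lo1 c + hi1 c) / 2)) \/
                       ~ box_covered (update_coord lo1 c ((lo1 c + hi1 c) / 2)) hi1).
      { apply NNPP. intros Hn. apply Hb1, (box_covered_split _ _ c); [lia| |];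
          apply NNPP; intros H; apply Hn; auto. }
      destruct (H1 c ltac:(lia)) as [_ Hcc]. destruct (Hcc (le_n c)) as [Elo Ehi].
      assert (Hlc := Hle c ltac:(lia)).
      destruct Hsplit as [Hb2|Hb2]; eexists; eexists; (split; [apply Hb2|]);
        intros i Hi; unfold update_coord; destruct (Nat.eqb_spec i c) as [->|Hic].
      + rewrite Elo, Ehi. split; intros; [lra|lia].
      + destruct (H1 i Hi) as [Ha Hb']. split; intros; [apply Ha|apply Hb']; lia.
      + rewrite Elo, Ehi. split; intros; [lra|lia].
      + destruct (H1 i Hi) as [Ha Hb']. split; intros; [apply Ha|apply Hb']; lia. }
  destruct (Hc n (le_n n)) as [lo' [hi' [Hb' H']]]. exists lo', hi'. split; auto.
  intros i Hi. apply (H' i Hi); auto.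
Qed.

Lemma uncovered_box_sequence r : 0 <= r -> ~ box_covered (fun _ => - r) (fun _ => r) ->
  exists lo hi : nat -> nat -> R, forall k, ~ box_covered (lo k) (hi k) /\ forall i, (i < n)%nat ->
    - r <= lo k i /\ hi k i <= r /\ hi k i - lo k i = 2 * r / 2 ^ k /\
    lo k i <= lo (S k) i /\ hi (S k) i <= hi k i.
Proof.
  intros Hr Hb0.
  set (covered := fun b : (nat -> R) * (nat -> R) => box_covered (fst b) (snd b)).
  set (ordered := fun b : (nat -> R) * (nat -> R) => forall i, (i < n)%nat -> fst b i <= snd b i).
  assert (Hstep : forall b, exists b', ordered b /\ ~ covered b ->
    ~ covered b' /\ box_halves (fst b) (snd b) (fst b') (snd b')).
  { intros b. destruct (classic (ordered b /\ ~ covered b)) as [[Ho Hb]|Hn].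
    - destruct (box_halve_uncovered (fst b) (snd b) Ho Hb) as [lo' [hi' H]].
      exists (lo', hi'). auto.
    - exists b. tauto. }
  destruct (choice _ Hstep) as [step Hstep'].
  set (bs := fun k => Nat.iter k step ((fun _ => - r), (fun _ => r))).
  exists (fun k => fst (bs k)), (fun k => snd (bs k)).
  assert (Hw : forall k, 0 <= 2 * r / 2 ^ k)
    by (intros k; apply Rdiv_le_0_compat; [lra|apply pow_lt; lra]).
  assert (Hnext : forall k, ~ covered (bs k) -> (forall i, (i < n)%nat ->
      snd (bs k) i - fst (bs k) i = 2 * r / 2 ^ k) ->
    ~ covered (bs (S k)) /\ box_halves (fst (bs k)) (snd (bs k)) (fst (bs (S k))) (snd (bs (S k)))).
  { intros k Hb Hk. apply Hstep'. split; auto. intros i Hi. specialize (Hk i Hi).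
    specialize (Hw k). lra. }
  induction k.
  - destruct (Hnext 0%nat Hb0) as [_ Hh]; [intros; simpl; lra|].
    split; auto. intros i Hi. destruct (Hh i Hi) as [H1 [H2 _]]. simpl in *. lra.
  - destruct IHk as [Hb Hk].
    destruct (Hnext k Hb) as [Hb' Hh]; [intros i Hi; apply Hk; auto|].
    destruct (Hnext (S k) Hb') as [_ Hh'].
    { intros i Hi. destruct (Hh i Hi) as [_ [_ H3]]. destruct (Hk i Hi) as [_ [_ [H4 _]]].
      rewrite H3, H4. simpl pow. field. apply pow_nonzero. lra. }
    split; auto. intros i Hi.
    destruct (Hk i Hi) as [H1 [H2 [H3 [H4 H5]]]]. destruct (Hh i Hi) as [_ [_ H6]].
    destruct (Hh' i Hi) as [H7 [H8 _]].
    repeat split; try lra. rewrite H6, H3. simpl pow. field. apply pow_nonzero. lra.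
Qed.

End CubeCompact.

Lemma nested_intervals (a b : nat -> R) :
  (forall k, a k <= a (S k)) -> (forall k, b (S k) <= b k) -> (forall k, a k <= b k) ->
  exists p, forall k, a k <= p <= b k.
Proof.
  intros Ha Hb Hab.
  assert (Hmon : forall k k', (k <= k')%nat -> a k <= a k' /\ b k' <= b k).
  { intros k k' H. induction H; [lra|]. assert (H1 := Ha m). assert (H2 := Hb m). lra. }
  assert (Hub : has_ub a).
  { exists (b O). intros y [k ->]. destruct (Hmon O k ltac:(lia)). assert (Hk := Hab k). lra. }
  destruct (growing_cv a Ha Hub) as [p Hp]. exists p. intros k. split.
  - apply (growing_ineq a p Ha Hp).
  - apply (Un_cv_le a p); auto. intros k'. assert (H1 := Hab k). assert (H2 := Hab k').
    destruct (le_ge_dec k k') as [H|H]; destruct (Hmon _ _ H); lra.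
Qed.

(** Bisection: a cube without finite subcover contains nested uncovered boxes shrinking to a
    point, but a box small enough lies in any cover element containing that point. *)
Lemma cube_compact n (r : R) : 0 <= r -> is_compact (cube n r).
Proof.
  intros Hr I U HU Hcov. apply NNPP. intros Hbad.
  destruct (uncovered_box_sequence n I U r Hr) as [lo [hi Hbs]].
  { intros [l Hl]. apply Hbad. exists l. intros x Hx. apply Hl. intros i Hi.
    specialize (Hx i Hi). unfold Rabs in Hx. destruct Rcase_abs in Hx; lra. }
  assert (Hw : forall k, 0 <= 2 * r / 2 ^ k)
    by (intros k; apply Rdiv_le_0_compat; [lra|apply pow_lt; lra]).
  assert (Hlim : forall i, exists p, (i < n)%nat -> forall k, lo k i <= p <= hi k i).
  { intros i. destruct (lt_dec i n) as [Hi|Hi]; [|exists 0; intros; lia].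
    destruct (nested_intervals (fun k => lo k i) (fun k => hi k i)) as [p Hp];
      [| | |exists p; auto]; intros k; destruct (Hbs k) as [_ H];
      destruct (H i Hi) as [H1 [H2 [H3 [H4 H5]]]]; auto.
    specialize (Hw k). lra. }
  destruct (choice _ Hlim) as [p Hp].
  set (pv := mkvec n p).
  assert (Hpv : forall i, (i < n)%nat -> vget pv i = p i) by (intros; apply vget_mkvec; auto).
  destruct (Hcov pv) as [j Hj].
  { intros i Hi. rewrite Hpv by auto. destruct (Hp i Hi 0%nat) as [H1 H2].
    destruct (Hbs 0%nat) as [_ H]. destruct (H i Hi) as [H3 [H4 _]]. apply Rabs_le. lra. }
  destruct (HU j pv Hj) as [rho [Hrho Hrho']].
  assert (Hn : 0 <= INR n) by apply pos_INR.
  destruct (archimed_cor1 (rho / (2 * r * INR n + 1))) as [k [Hk Hk0]];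
    [apply Rdiv_lt_0_compat; nra|].
  apply (proj1 (Hbs k)). exists (j :: nil). intros y Hy. exists j. split; [left; auto|].
  apply Hrho'. eapply Rle_lt_trans; [apply vnorm_le_dist1|]. unfold dist1, norm1.
  eapply Rle_lt_trans; [apply (rsum_le _ (fun _ => 2 * r / 2 ^ k))|].
  { intros i Hi. rewrite Hpv by auto. destruct (Hp i Hi k) as [H1 H2]. destruct (Hy i Hi) as [H3 H4].
    destruct (Hbs k) as [_ H]. destruct (H i Hi) as [_ [_ [H5 _]]]. rewrite <- H5.
    apply Rabs_le. lra. }
  rewrite rsum_const. assert (HP2 := INR_succ_le_pow2 k). rewrite S_INR in HP2.
  assert (0 < INR k) by (apply lt_0_INR; auto).
  assert (Hk' : / INR k * (2 * r * INR n + 1) < rho).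
  { replace rho with ((rho / (2 * r * INR n + 1)) * (2 * r * INR n + 1)) by (field; nra).
    apply Rmult_lt_compat_r; [nra|auto]. }
  apply Rle_lt_trans with (/ INR k * (2 * r * INR n + 1)); auto.
  unfold Rdiv. rewrite <- Rmult_assoc.
  apply Rle_trans with (INR n * (2 * r) * / INR k).
  - apply Rmult_le_compat_l; [nra|]. apply Rinv_le_contravar; lra.
  - rewrite (Rmult_comm (/ INR k)). apply Rmult_le_compat_r; [left; apply Rinv_0_lt_compat|]; lra.
Qed.

(** * The average ODE *)

Lemma MVT_closed (f df : R -> R) (a b : R) : a < b ->
  (forall x, a < x < b -> derivable_pt_lim f x (df x)) ->
  (forall x, a <= x <= b -> continuity_pt f x) ->
  exists c, a <= c <= b /\ f b - f a = df c * (b - a).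
Proof.
  intros Hab Hd Hc. destruct (Derive.MVT_gen f a b df) as [c [Hc1 Hc2]].
  - rewrite Rmin_left, Rmax_right by lra. intros x Hx. apply Derive.is_derive_Reals. auto.
  - rewrite Rmin_left, Rmax_right by lra. auto.
  - rewrite Rmin_left, Rmax_right in Hc1 by lra. eauto.
Qed.

Section AverageODE.

Variables (n : nat) (fbar : vec n -> vec n) (Xc : R -> vec n).
Hypothesis Hode : ode_solution_nonneg fbar Xc.

Lemma ode_solution_coord t : 0 <= t -> forall e, 0 < e -> exists d, 0 < d /\
  forall h, h <> 0 -> Rabs h < d -> 0 <= t + h -> forall i, (i < n)%nat ->
    Rabs ((vget (Xc (t + h)) i - vget (Xc t) i) / h - vget (fbar (Xc t)) i) < e.
Proof.
  intros Ht e He. destruct (Hode t Ht e He) as [d [Hd Hd']]. exists d. split; auto.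
  intros h Hh Hhd Hth i Hi. specialize (Hd' h Hh Hhd Hth).
  eapply Rle_lt_trans; [|apply Hd']. rewrite vnorm_norm2.
  eapply Rle_trans; [|apply (abs_le_norm2 _ _ i Hi)]. right. f_equal.
  rewrite vget_vsub, vget_vscal, vget_vsub. unfold Rdiv. ring.
Qed.

(** Extended to negative times so that the results on functions on [R] apply up to [t = 0]. *)
Definition clamped_coord (i : nat) (s : R) : R := vget (Xc (Rmax 0 s)) i.

Lemma clamped_coord_continuous i t : (i < n)%nat -> 0 <= t -> continuity_pt (clamped_coord i) t.
Proof.
  intros Hi Ht. destruct (ode_solution_coord t Ht 1 ltac:(lra)) as [d [Hd Hd']].
  set (g := vget (fbar (Xc t)) i).
  assert (Hg0 : 0 < Rabs g + 1) by (assert (0 <= Rabs g) by apply Rabs_pos; lra).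
  assert (Hb : forall h, Rabs h < d -> 0 <= t + h ->
      Rabs (vget (Xc (t + h)) i - vget (Xc t) i) <= Rabs h * (Rabs g + 1)).
  { intros h Hh Hth. destruct (Req_dec h 0) as [->|Hh0].
    - rewrite Rplus_0_r, Rminus_diag, Rabs_R0. lra.
    - specialize (Hd' h Hh0 Hh Hth i Hi). fold g in Hd'.
      replace (vget (Xc (t + h)) i - vget (Xc t) i)
        with (h * ((vget (Xc (t + h)) i - vget (Xc t) i) / h)) by (field; auto).
      rewrite Rabs_mult. apply Rmult_le_compat_l; [apply Rabs_pos|].
      replace ((vget (Xc (t + h)) i - vget (Xc t) i) / h)
        with (((vget (Xc (t + h)) i - vget (Xc t) i) / h - g) + g) by ring.
      eapply Rle_trans; [apply Rabs_triang|lra]. }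
  intros e He. exists (Rmin d (e / (Rabs g + 1))).
  split; [apply Rmin_pos; auto; apply Rdiv_lt_0_compat; auto|].
  intros x [_ Hx]. simpl in *. unfold R_dist, clamped_coord in *.
  assert (Hx1 : Rabs (x - t) < d) by (eapply Rlt_le_trans; [apply Hx|apply Rmin_l]).
  assert (Hx2 : Rabs (x - t) * (Rabs g + 1) < e).
  { assert (Rabs (x - t) < e / (Rabs g + 1)) by (eapply Rlt_le_trans; [apply Hx|apply Rmin_r]).
    apply (Rmult_lt_compat_r (Rabs g + 1)) in H; auto. field_simplify in H; lra. }
  rewrite (Rmax_right 0 t) by auto.
  destruct (Rle_dec 0 x).
  - rewrite Rmax_right by auto. replace x with (t + (x - t)) by ring.
    eapply Rle_lt_trans; [apply Hb; auto; lra|]. replace (t + (x - t)) with x by ring. auto.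
  - rewrite Rmax_left by lra. destruct (Req_dec t 0) as [->|Ht0].
    + rewrite Rminus_diag, Rabs_R0. lra.
    + replace 0 with (t + (- t)) by ring.
      rewrite Rabs_left in Hx1, Hx2 by lra.
      eapply Rle_lt_trans; [apply Hb; [rewrite Rabs_Ropp, Rabs_right; lra|lra]|].
      rewrite Rabs_Ropp, Rabs_right by lra. nra.
Qed.

Lemma clamped_coord_derivable i t : (i < n)%nat -> 0 < t ->
  derivable_pt_lim (clamped_coord i) t (vget (fbar (Xc t)) i).
Proof.
  intros Hi Ht e He. destruct (ode_solution_coord t ltac:(lra) e He) as [d [Hd Hd']].
  exists (mkposreal (Rmin d t) (Rmin_pos _ _ Hd Ht)). intros h Hh Hhd. simpl in Hhd.
  assert (Hht : Rabs h < t) by (eapply Rlt_le_trans; [apply Hhd|apply Rmin_r]).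
  apply Rabs_def2 in Hht as Hht'.
  unfold clamped_coord. rewrite (Rmax_right 0 t), (Rmax_right 0 (t + h)) by lra.
  apply Hd'; auto; [|lra]. eapply Rlt_le_trans; [apply Hhd|apply Rmin_l].
Qed.

Lemma ode_solution_mvt i s t : (i < n)%nat -> 0 <= s <= t -> exists c, s <= c <= t /\
  vget (Xc t) i - vget (Xc s) i = vget (fbar (Xc c)) i * (t - s).
Proof.
  intros Hi Hst. destruct (Req_dec s t) as [->|Hne]; [exists t; split; [lra|ring]|].
  destruct (MVT_closed (clamped_coord i) (fun c => vget (fbar (Xc c)) i) s t) as [c [Hc Hc']].
  - lra.
  - intros x Hx. apply clamped_coord_derivable; auto. lra.
  - intros x Hx. apply clamped_coord_continuous; auto. lra.
  - exists c. split; auto. unfold clamped_coord in Hc'. rewrite !Rmax_right in Hc' by lra. auto.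
Qed.

Lemma ode_solution_bounded M : 0 <= M -> exists r, 0 <= r /\ forall t, 0 <= t <= M -> cube n r (Xc t).
Proof.
  intros HM.
  assert (Hc : forall i, exists B, 0 <= B /\
     ((i < n)%nat -> forall t, 0 <= t <= M -> Rabs (vget (Xc t) i) <= B)).
  { intros i. destruct (lt_dec i n) as [Hi|Hi]; [|exists 0; split; [lra|intros; lia]].
    assert (Hcont : forall t, 0 <= t <= M -> continuity_pt (clamped_coord i) t)
      by (intros; apply clamped_coord_continuous; auto; lra).
    destruct (continuity_ab_maj (clamped_coord i) 0 M HM Hcont) as [a [Ha _]].
    destruct (continuity_ab_min (clamped_coord i) 0 M HM Hcont) as [b [Hb _]].
    exists (Rabs (clamped_coord i a) + Rabs (clamped_coord i b)).
    split; [assert (H1 := Rabs_pos (clamped_coord i a)); assert (H2 := Rabs_pos (clamped_coord i b)); lra|].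
    intros _ t Ht. specialize (Ha t Ht). specialize (Hb t Ht).
    unfold clamped_coord in Ha, Hb |- *. rewrite (Rmax_right 0 t) in Ha, Hb by lra.
    revert Ha Hb. generalize (vget (Xc (Rmax 0 a)) i) (vget (Xc (Rmax 0 b)) i) (vget (Xc t) i).
    intros u v w Hu Hv. unfold Rabs; repeat destruct Rcase_abs; lra. }
  destruct (choice _ Hc) as [B HB].
  exists (rsum B n). split; [apply rsum_nonneg; intros; apply HB|].
  intros t Ht i Hi. eapply Rle_trans; [apply (proj2 (HB i)); auto|].
  apply rsum_term_le; auto. intros; apply HB.
Qed.

Variables (M r Bf L : R).
Hypothesis HXc : forall t, 0 <= t <= M -> cube n r (Xc t).
Hypothesis Hfbar_bound : forall z, cube n r z -> norm1 n (vget (fbar z)) <= Bf.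
Hypothesis Hfbar_lip : forall z1 z2, cube n r z1 -> cube n r z2 -> dist1 (fbar z1) (fbar z2) <= L * dist1 z1 z2.
Hypothesis HL : 0 <= L.

Lemma ode_solution_lipschitz s t : 0 <= s <= t -> t <= M -> dist1 (Xc t) (Xc s) <= INR n * Bf * (t - s).
Proof.
  intros Hst HtM. unfold dist1, norm1. rewrite Rmult_assoc, <- rsum_const. apply rsum_le.
  intros i Hi. destruct (ode_solution_mvt i s t Hi Hst) as [c [Hc Hc']].
  rewrite Hc', Rabs_mult, (Rabs_right (t - s)) by lra.
  apply Rmult_le_compat_r; [lra|].
  eapply Rle_trans; [apply (abs_le_norm1 n); auto|]. apply Hfbar_bound, HXc. lra.
Qed.

Lemma ode_solution_taylor s h : 0 <= s -> 0 <= h -> s + h <= M ->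
  norm1 n (fun c => vget (Xc (s + h)) c - vget (Xc s) c - h * vget (fbar (Xc s)) c)
    <= INR n * (L * (INR n * Bf) * h ^ 2).
Proof.
  intros Hs Hh HM. unfold norm1. rewrite <- rsum_const. apply rsum_le. intros i Hi.
  destruct (ode_solution_mvt i s (s + h) Hi ltac:(lra)) as [c [Hc Hc']].
  replace (vget (Xc (s + h)) i - vget (Xc s) i - h * vget (fbar (Xc s)) i)
    with (h * (vget (fbar (Xc c)) i - vget (fbar (Xc s)) i)) by (rewrite Hc'; ring).
  rewrite Rabs_mult, (Rabs_right h) by lra.
  assert (HBf : 0 <= Bf)
    by (apply Rle_trans with (norm1 n (vget (fbar (Xc s)))); [apply norm1_nonneg|apply Hfbar_bound, HXc; lra]).
  assert (0 <= INR n) by apply pos_INR.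
  assert (H1 : Rabs (vget (fbar (Xc c)) i - vget (fbar (Xc s)) i) <= L * (INR n * Bf * h)).
  { eapply Rle_trans; [apply (abs_le_norm1 n (fun i => vget (fbar (Xc c)) i - vget (fbar (Xc s)) i)); auto|].
    eapply Rle_trans; [apply Hfbar_lip; apply HXc; lra|]. apply Rmult_le_compat_l; auto.
    eapply Rle_trans; [apply ode_solution_lipschitz; lra|]. apply Rmult_le_compat_l; nra. }
  replace (L * (INR n * Bf) * h ^ 2) with (h * (L * (INR n * Bf * h))) by ring.
  apply Rmult_le_compat_l; lra.
Qed.

End AverageODE.

(** * Ergodic averages *)

Lemma norm1_average n (g : nat -> nat -> R) N B : (forall k, norm1 n (g k) <= B) ->
  norm1 n (fun c => / INR (S N) * rsum (fun k => g k c) (S N)) <= B.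
Proof.
  intros Hg. assert (HN : 0 < INR (S N)) by (apply lt_0_INR; lia).
  rewrite norm1_scal, Rabs_right by (left; apply Rinv_0_lt_compat; auto).
  apply Rle_trans with (/ INR (S N) * rsum (fun _ => B) (S N)).
  - apply Rmult_le_compat_l; [left; apply Rinv_0_lt_compat; auto|].
    eapply Rle_trans; [apply (norm1_rsum n (fun k c => g k c))|]. apply rsum_le; auto.
  - rewrite rsum_const. right. field. lra.
Qed.

Section ErgodicAverage.

Context {n m : nat} {Omega : Type}.
Variables (f : vec n -> vec m -> vec n) (Y : nat -> Omega -> vec m) (w : Omega).

(** Matches the averages of hypothesis (A2). *)
Definition ergodic_avg (z : vec n) (N : nat) : vec n :=
  vscal (/ INR (N + 1)) (vsum (fun k => f z (Y (S k) w)) N).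

Lemma vget_ergodic_avg z N c :
  vget (ergodic_avg z N) c = / INR (S N) * rsum (fun k => vget (f z (Y (S k) w)) c) (S N).
Proof. unfold ergodic_avg. rewrite vget_vscal, vget_vsum, Nat.add_1_r. reflexivity. Qed.

Lemma ergodic_avg_cv_dist1 z l : vec_cv (ergodic_avg z) l ->
  forall e, 0 < e -> exists N0, forall N, (N0 <= N)%nat -> dist1 (ergodic_avg z N) l <= e.
Proof.
  intros Hc e He. assert (0 <= INR n) by apply pos_INR.
  destruct (Hc (e / (INR n + 1))) as [N0 HN0]; [apply Rdiv_lt_0_compat; lra|].
  exists N0. intros N HN. eapply Rle_trans; [apply dist1_le_vnorm|]. specialize (HN0 N HN).
  apply Rle_trans with (INR n * (e / (INR n + 1))); [apply Rmult_le_compat_l; lra|].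
  apply (Rmult_le_reg_r (INR n + 1)); [lra|]. field_simplify; lra.
Qed.

Variables (SY : vec m -> Prop).
Hypothesis HYS : forall k, SY (Y k w).

Lemma limit_of_avg_lipschitz (fbar : vec n -> vec n) L z1 z2 :
  vec_cv (ergodic_avg z1) (fbar z1) -> vec_cv (ergodic_avg z2) (fbar z2) ->
  (forall y, SY y -> dist1 (f z1 y) (f z2 y) <= L * dist1 z1 z2) ->
  dist1 (fbar z1) (fbar z2) <= L * dist1 z1 z2.
Proof.
  intros H1 H2 Hl. apply Rle_plus_epsilon. intros e He.
  destruct (ergodic_avg_cv_dist1 z1 _ H1 (e / 2)) as [N1 HN1]; [lra|].
  destruct (ergodic_avg_cv_dist1 z2 _ H2 (e / 2)) as [N2 HN2]; [lra|].
  set (N := (N1 + N2)%nat). specialize (HN1 N ltac:(unfold N; lia)). specialize (HN2 N ltac:(unfold N; lia)).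
  assert (Ha : dist1 (ergodic_avg z1 N) (ergodic_avg z2 N) <= L * dist1 z1 z2).
  { unfold dist1 at 1.
    rewrite (norm1_ext n _ (fun c => / INR (S N) *
      rsum (fun k => vget (f z1 (Y (S k) w)) c - vget (f z2 (Y (S k) w)) c) (S N))).
    - apply (norm1_average n (fun k c => vget (f z1 (Y (S k) w)) c - vget (f z2 (Y (S k) w)) c)).
      intros k. apply Hl, HYS.
    - intros c _. rewrite !vget_ergodic_avg, rsum_minus. ring. }
  eapply Rle_trans; [apply (dist1_triangle _ (ergodic_avg z1 N))|]. rewrite dist1_sym.
  eapply Rle_trans; [apply Rplus_le_compat_l, (dist1_triangle _ (ergodic_avg z2 N))|]. lra.
Qed.

Lemma limit_of_avg_bound (fbar : vec n -> vec n) B z :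
  vec_cv (ergodic_avg z) (fbar z) -> (forall y, SY y -> norm1 n (vget (f z y)) <= B) ->
  norm1 n (vget (fbar z)) <= B.
Proof.
  intros H1 Hl. apply Rle_plus_epsilon. intros e He.
  destruct (ergodic_avg_cv_dist1 z _ H1 e He) as [N0 HN0]. specialize (HN0 N0 (le_n _)).
  assert (Ha : norm1 n (vget (ergodic_avg z N0)) <= B).
  { rewrite (norm1_ext n _ (fun c => / INR (S N0) * rsum (fun k => vget (f z (Y (S k) w)) c) (S N0)))
      by (intros; apply vget_ergodic_avg).
    apply (norm1_average n (fun k => vget (f z (Y (S k) w)))). intros k; apply Hl, HYS. }
  assert (Ht : norm1 n (vget (fbar z)) <= dist1 (fbar z) (ergodic_avg z N0) + norm1 n (vget (ergodic_avg z N0))).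
  { unfold dist1. eapply Rle_trans; [|apply norm1_add]. right. apply norm1_ext. intros; ring. }
  rewrite dist1_sym in HN0. lra.
Qed.

Definition drift_sum (fbar : vec n -> vec n) (z : vec n) (N : nat) : nat -> R :=
  fun c => rsum (fun j => vget (f z (Y (S j) w)) c - vget (fbar z) c) N.

Lemma drift_sum_sublinear (fbar : vec n -> vec n) z B :
  (forall y, SY y -> norm1 n (vget (f z y)) <= B) -> norm1 n (vget (fbar z)) <= B ->
  vec_cv (ergodic_avg z) (fbar z) ->
  forall eta, 0 < eta -> exists C, 0 <= C /\ forall N, norm1 n (drift_sum fbar z N) <= C + eta * INR N.
Proof.
  intros Hfb Hfbb Hcv eta Heta. destruct (ergodic_avg_cv_dist1 z _ Hcv eta Heta) as [N0 HN0].
  assert (HB : 0 <= B) by (eapply Rle_trans; [apply norm1_nonneg|apply Hfbb]).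
  assert (0 <= INR N0) by apply pos_INR.
  exists (2 * B * INR N0). split; [nra|]. intros N.
  destruct (le_lt_dec N N0) as [Hle|Hlt].
  - apply Rle_trans with (2 * B * INR N).
    + eapply Rle_trans; [apply (norm1_rsum n (fun j c => vget (f z (Y (S j) w)) c - vget (fbar z) c))|].
      replace (2 * B * INR N) with (INR N * (2 * B)) by ring. rewrite <- rsum_const.
      apply rsum_le. intros j _. eapply Rle_trans; [apply norm1_sub|].
      assert (Hj := Hfb (Y (S j) w) (HYS _)). lra.
    + apply le_INR in Hle. assert (0 <= INR N) by apply pos_INR. nra.
  - destruct N as [|N]; [lia|]. specialize (HN0 N ltac:(lia)).
    assert (HNp : 0 < INR (S N)) by (apply lt_0_INR; lia).
    rewrite (norm1_ext n _ (fun c => INR (S N) * (vget (ergodic_avg z N) c - vget (fbar z) c))).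
    + rewrite norm1_scal, Rabs_right by lra. fold (dist1 (ergodic_avg z N) (fbar z)).
      assert (INR (S N) * dist1 (ergodic_avg z N) (fbar z) <= INR (S N) * eta)
        by (apply Rmult_le_compat_l; lra).
      assert (0 <= B * INR N0) by nra. lra.
    + intros c _. unfold drift_sum. rewrite vget_ergodic_avg, rsum_minus, rsum_const. field. lra.
Qed.

End ErgodicAverage.

(** [drift_sum] as a vector, built by a recursion whose steps are continuous maps. *)
Fixpoint drift_vec {n m Omega} (f : vec n -> vec m -> vec n) (fbar : vec n -> vec n)
    (Y : nat -> Omega -> vec m) (z : vec n) (N : nat) (w : Omega) : vec n :=
  match N with
  | O => mkvec n (fun _ => 0)
  | S N' => vadd (drift_vec f fbar Y z N' w) (vsub (f z (Y (S N') w)) (fbar z))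
  end.

Lemma vget_drift_vec {n m Omega} (f : vec n -> vec m -> vec n) fbar (Y : nat -> Omega -> vec m) z N w c :
  (c < n)%nat -> vget (drift_vec f fbar Y z N w) c = drift_sum f Y w fbar z N c.
Proof.
  intros Hc. induction N; simpl; [apply vget_mkvec; auto|].
  rewrite vget_vadd, vget_vsub, IHN. reflexivity.
Qed.

Lemma event_drift_sum_le {n m Omega} {F : (Omega -> Prop) -> Prop} (HF : is_sigma_algebra F)
  (f : vec n -> vec m -> vec n) fbar (Y : nat -> Omega -> vec m) z N (b : R) :
  jointly_continuous f -> (forall k, random_vec F (Y k)) ->
  F (fun w => norm1 n (drift_sum f Y w fbar z N) <= b).
Proof.
  intros Hf HY.
  assert (Hrv : random_vec F (drift_vec f fbar Y z N)).
  { induction N; [apply (random_vec_const HF)|].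
    apply (random_vec_comp HF (drift_vec f fbar Y z N) (Y (S N)) (fun u y => vadd u (vsub (f z y) (fbar z))));
      auto.
    apply jointly_continuous_shift, jointly_continuous_freeze; auto. }
  apply (sigma_ext (fun w => ~ (fun v : vec n => norm1 n (vget v) > b) (drift_vec f fbar Y z N w))).
  - apply (sigma_compl HF). apply (Hrv (fun v : vec n => norm1 n (vget v) > b)), is_open_norm1_gt.
  - intros w. rewrite (norm1_ext n _ (drift_sum f Y w fbar z N)) by (intros; apply vget_drift_vec; auto).
    split; intros; lra.
Qed.

(** * The Euler scheme with frozen drift *)

Lemma exp_le a b : a <= b -> exp a <= exp b.
Proof. intros [H|H]; [left; apply exp_increasing; auto|subst; lra]. Qed.

Lemma pow_le_exp a k : 0 <= a -> (1 + a) ^ k <= exp (a * INR k).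
Proof.
  intros Ha. induction k; [simpl; rewrite Rmult_0_r, exp_0; lra|].
  rewrite S_INR. replace (a * (INR k + 1)) with (a * INR k + a) by ring. rewrite exp_plus. simpl pow.
  assert (H1 := exp_ineq1_le a). assert (0 <= (1 + a) ^ k) by (apply pow_le; lra).
  rewrite Rmult_comm. apply Rmult_le_compat; auto; lra.
Qed.

Lemma gronwall_step (u u' b c : R) k : 0 <= b -> 0 <= c ->
  u' <= (1 + b) * u + c -> u <= INR k * c * (1 + b) ^ k -> u' <= INR (S k) * c * (1 + b) ^ (S k).
Proof.
  intros Hb Hc H1 H2. rewrite S_INR. simpl pow.
  assert (1 <= (1 + b) ^ k) by (apply pow_R1_Rle; lra).
  assert (0 <= INR k) by apply pos_INR.
  assert ((1 + b) * u <= (1 + b) * (INR k * c * (1 + b) ^ k)) by (apply Rmult_le_compat_l; lra).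
  assert (c <= c * ((1 + b) * (1 + b) ^ k)) by (assert (1 <= (1 + b) * (1 + b) ^ k) by nra; nra).
  nra.
Qed.

(** Summation by parts: replacing every index [iota j] by the latest one [iota k] costs one
    frozen partial sum for each jump of [iota]. *)
Lemma diagonal_sum_switch (n : nat) (a : nat -> nat -> nat -> R) (iota : nat -> nat) (Sm : R) (K : nat) :
  (forall j, (iota j <= iota (S j))%nat) ->
  (forall j N, (j < K)%nat -> (N <= K)%nat -> norm1 n (fun c => rsum (fun l => a (iota j) l c) N) <= Sm) ->
  forall k, (S k <= K)%nat ->
    norm1 n (fun c => rsum (fun j => a (iota j) j c) (S k) -
                      rsum (fun l => a (iota k) l c) (S k))
      <= 2 * INR (iota k) * Sm.
Proof.
  intros Hmon HSm k Hk.
  assert (HSm0 : 0 <= Sm) by (eapply Rle_trans; [apply norm1_nonneg|apply (HSm 0%nat 0%nat)]; lia).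
  induction k.
  - rewrite (norm1_ext n _ (fun _ => 0)) by (intros; simpl; ring). rewrite norm1_zero.
    assert (0 <= INR (iota 0%nat)) by apply pos_INR. nra.
  - assert (HSmk := IHk ltac:(lia)).
    rewrite (norm1_ext n _ (fun c =>
      (rsum (fun j => a (iota j) j c) (S k) - rsum (fun l => a (iota k) l c) (S k))
      + (rsum (fun l => a (iota k) l c) (S k) -
         rsum (fun l => a (iota (S k)) l c) (S k)))) by (intros; simpl; ring).
    eapply Rle_trans; [apply norm1_add|].
    destruct (Nat.eq_dec (iota (S k)) (iota k)) as [Heq|Hne].
    + rewrite Heq, (norm1_ext n (fun c => rsum (fun l => a (iota k) l c) (S k) -
        rsum (fun l => a (iota k) l c) (S k)) (fun _ => 0)), norm1_zero by (intros; ring).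
      lra.
    + assert (Hlt : (S (iota k) <= iota (S k))%nat) by (specialize (Hmon k); lia).
      apply le_INR in Hlt. rewrite S_INR in Hlt.
      assert (H2 : norm1 n (fun c => rsum (fun l => a (iota k) l c) (S k) -
                     rsum (fun l => a (iota (S k)) l c) (S k)) <= 2 * Sm).
      { eapply Rle_trans; [apply norm1_sub|].
        assert (norm1 n (fun c => rsum (fun l => a (iota k) l c) (S k)) <= Sm) by (apply HSm; lia).
        assert (norm1 n (fun c => rsum (fun l => a (iota (S k)) l c) (S k)) <= Sm)
          by (apply HSm; lia).
        lra. }
      assert (0 <= INR (iota k)) by apply pos_INR. nra.
Qed.

Definition mesh_point {n} (Xc : R -> vec n) (p i : nat) : vec n := Xc (INR i / INR p).

(** With [phi] the size of the frozen drift and [gam] the per-step consistency error,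
    the global error of the scheme on [[0, M]] is at most [M gam e^(LM) + phi]. *)
Definition euler_bound (n : nat) (L B M : R) (p : nat) (eps kappa : R) : R :=
  let phi := (2 * M * INR p + 1) * kappa in
  M * (L * phi + 2 * L * (INR n * B) / INR p + INR n * L * (INR n * B) * eps) * exp (L * M) + phi.

Section EulerScheme.

Context {n m : nat} {Omega : Type}.
Variables (SY : vec m -> Prop) (Y : nat -> Omega -> vec m) (f : vec n -> vec m -> vec n)
  (fbar : vec n -> vec n) (Xc : R -> vec n) (x : vec n) (w : Omega).
Hypothesis HYS : forall k, SY (Y k w).
Hypothesis Hode : ode_solution_nonneg fbar Xc.
Hypothesis Hx : Xc 0 = x.

Variables (M r L B : R).
Hypothesis HM : 0 <= M.
Hypothesis HL : 0 <= L.
Hypothesis HB : 0 <= B.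
Hypothesis HXc : forall t, 0 <= t <= M -> cube n r (Xc t).
Hypothesis Hf_lip : forall z1 z2 y, cube n (r + 1) z1 -> cube n (r + 1) z2 -> SY y ->
  dist1 (f z1 y) (f z2 y) <= L * dist1 z1 z2.
Hypothesis Hfbar_lip : forall z1 z2, cube n (r + 1) z1 -> cube n (r + 1) z2 ->
  dist1 (fbar z1) (fbar z2) <= L * dist1 z1 z2.
Hypothesis Hfbar_bound : forall z, cube n (r + 1) z -> norm1 n (vget (fbar z)) <= B.

Variables (p : nat) (eps kappa : R).
Hypothesis Hp : (0 < p)%nat.
Hypothesis Heps : 0 < eps.
Hypothesis Hdrift : forall i N, INR i <= M * INR p -> INR N * eps <= M ->
  eps * norm1 n (drift_sum f Y w fbar (mesh_point Xc p i) N) <= kappa.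
Hypothesis Hsmall : euler_bound n L B M p eps kappa <= 1.

Let X := Xseq f Y eps x w.
Let phi := (2 * M * INR p + 1) * kappa.
Let gam := L * phi + 2 * L * (INR n * B) / INR p + INR n * L * (INR n * B) * eps.

(** Step [j] of the scheme freezes the drift at the mesh point preceding time [j eps]. *)
Definition mesh_index (j : nat) : nat := nat_floor (INR j * eps * INR p).

Definition frozen_increment (i l : nat) (c : nat) : R :=
  eps * (vget (f (mesh_point Xc p i) (Y (S l) w)) c - vget (fbar (mesh_point Xc p i)) c).

Definition frozen_drift (k : nat) (c : nat) : R := rsum (fun j => frozen_increment (mesh_index j) j c) k.

Definition euler_residual (k : nat) (c : nat) : R :=
  vget (X k) c - vget (Xc (INR k * eps)) c - frozen_drift k c.

Lemma mesh_pos : 0 < INR p.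
Proof. apply lt_0_INR; auto. Qed.

Lemma drift_tolerance_nonneg : 0 <= kappa.
Proof.
  assert (H := Hdrift 0 0 ltac:(simpl; apply Rmult_le_pos; [lra|apply pos_INR]) ltac:(simpl; lra)).
  assert (0 <= eps * norm1 n (drift_sum f Y w fbar (mesh_point Xc p 0) 0))
    by (apply Rmult_le_pos; [lra|apply norm1_nonneg]).
  lra.
Qed.

Lemma consistency_error_nonneg : 0 <= gam.
Proof.
  assert (Hp' := mesh_pos). assert (HS := drift_tolerance_nonneg). assert (0 <= INR n) by apply pos_INR.
  assert (0 <= phi) by (unfold phi; apply Rmult_le_pos; nra).
  assert (0 <= 2 * L * (INR n * B) / INR p)
    by (apply Rdiv_le_0_compat; [repeat apply Rmult_le_pos|]; lra).
  assert (0 <= INR n * L * (INR n * B) * eps) by (repeat apply Rmult_le_pos; lra).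
  assert (0 <= L * phi) by (apply Rmult_le_pos; lra).
  unfold gam. lra.
Qed.

Lemma mesh_index_spec j : INR (mesh_index j) <= INR j * eps * INR p < INR (mesh_index j) + 1.
Proof.
  apply nat_floor_spec. assert (0 <= INR j) by apply pos_INR. assert (Hp' := mesh_pos).
  apply Rmult_le_pos; nra.
Qed.

Lemma mesh_index_le j : (mesh_index j <= mesh_index (S j))%nat.
Proof.
  assert (Hp' := mesh_pos). assert (0 <= INR j) by apply pos_INR.
  apply nat_floor_le; [apply Rmult_le_pos; nra|]. rewrite S_INR.
  apply Rmult_le_compat_r; lra.
Qed.

Lemma mesh_index_time j : INR j * eps <= M -> 0 <= INR (mesh_index j) / INR p <= INR j * eps /\
  INR j * eps - INR (mesh_index j) / INR p <= / INR p.
Proof.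
  intros Hj. assert (Hp' := mesh_pos). destruct (mesh_index_spec j) as [H1 H2].
  assert (0 <= INR (mesh_index j)) by apply pos_INR.
  split; [split|]; [apply Rdiv_le_0_compat; auto| |];
    apply (Rmult_le_reg_r (INR p)); auto; unfold Rdiv;
    rewrite ?Rmult_minus_distr_r, !Rmult_assoc, Rinv_l, Rmult_1_r by lra; lra.
Qed.

Lemma frozen_sum_bound j N : INR j * eps <= M -> INR N * eps <= M ->
  norm1 n (fun c => rsum (fun l => frozen_increment (mesh_index j) l c) N) <= kappa.
Proof.
  intros Hj HN. eapply Rle_trans; [|apply (Hdrift (mesh_index j) N); auto].
  - rewrite <- (Rabs_right eps), <- norm1_scal by lra. right. apply norm1_ext. intros c _.
    unfold frozen_increment, drift_sum. rewrite <- rsum_scal. reflexivity.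
  - destruct (mesh_index_time j Hj) as [[H1 H2] _]. assert (Hp' := mesh_pos).
    apply (Rmult_le_reg_r (/ INR p)); [apply Rinv_0_lt_compat; auto|].
    rewrite Rmult_assoc, Rinv_r, Rmult_1_r by lra. unfold Rdiv in H2. lra.
Qed.

Lemma frozen_drift_bound k : INR k * eps <= M -> norm1 n (frozen_drift k) <= phi.
Proof.
  assert (HS := drift_tolerance_nonneg). assert (Hp' := mesh_pos).
  destruct k as [|k]; intros Hk.
  - rewrite (norm1_ext n _ (fun _ => 0)), norm1_zero by reflexivity.
    unfold phi. apply Rmult_le_pos; nra.
  - assert (Hk' : INR k * eps <= M) by (rewrite S_INR in Hk; lra).
    assert (Hsw := diagonal_sum_switch n frozen_increment mesh_index kappa (S k) mesh_index_le).
    specialize (Hsw ltac:(intros j N Hj HN; apply frozen_sum_bound;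
      [apply lt_INR in Hj|apply le_INR in HN]; apply Rle_trans with (INR (S k) * eps); auto;
      apply Rmult_le_compat_r; lra) k (le_n _)).
    assert (Hfr := frozen_sum_bound k (S k) Hk' Hk).
    assert (Hik : INR (mesh_index k) <= M * INR p).
    { destruct (mesh_index_spec k) as [H1 _]. apply Rle_trans with (INR k * eps * INR p); auto.
      apply Rmult_le_compat_r; lra. }
    apply Rle_trans with (norm1 n (fun c => (frozen_drift (S k) c -
      rsum (fun l => frozen_increment (mesh_index k) l c) (S k)) +
      rsum (fun l => frozen_increment (mesh_index k) l c) (S k))).
    { right. apply norm1_ext; intros; ring. }
    eapply Rle_trans; [apply norm1_add|]. unfold frozen_drift, phi. nra.
Qed.

Lemma dist1_euler_residual k : INR k * eps <= M ->
  dist1 (X k) (Xc (INR k * eps)) <= norm1 n (euler_residual k) + phi.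
Proof.
  intros Hk. unfold dist1.
  rewrite (norm1_ext n _ (fun c => euler_residual k c + frozen_drift k c))
    by (intros; unfold euler_residual; ring).
  eapply Rle_trans; [apply norm1_add|]. assert (H := frozen_drift_bound k Hk). lra.
Qed.

Lemma ode_solution_in_cube t : 0 <= t <= M -> cube n (r + 1) (Xc t).
Proof. intros Ht. apply (cube_mono n r); [lra|auto]. Qed.

(** The residual changes by the error of freezing the drift at the mesh point, the error of
    that mesh point, and the Taylor remainder of [Xc]. *)
Lemma euler_residual_succ k c : euler_residual (S k) c = euler_residual k c
    + eps * (vget (f (X k) (Y (S k) w)) c - vget (f (mesh_point Xc p (mesh_index k)) (Y (S k) w)) c)
    + eps * (vget (fbar (mesh_point Xc p (mesh_index k))) c - vget (fbar (Xc (INR k * eps))) c)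
    - (vget (Xc (INR k * eps + eps)) c - vget (Xc (INR k * eps)) c - eps * vget (fbar (Xc (INR k * eps))) c).
Proof.
  unfold euler_residual, frozen_drift, frozen_increment. rewrite S_INR.
  replace ((INR k + 1) * eps) with (INR k * eps + eps) by ring.
  unfold X. simpl Xseq. simpl rsum. rewrite vget_vadd, vget_vscal. ring.
Qed.

Lemma euler_residual_step k : INR (S k) * eps <= M -> dist1 (X k) (Xc (INR k * eps)) <= 1 ->
  norm1 n (euler_residual (S k)) <= (1 + eps * L) * norm1 n (euler_residual k) + eps * gam.
Proof.
  intros Hk Hnear. assert (Hse : INR k * eps + eps <= M) by (rewrite S_INR in Hk; lra). clear Hk.
  rewrite (norm1_ext n _ _ (fun c _ => euler_residual_succ k c)).
  set (s := INR k * eps) in *. set (cp := mesh_point Xc p (mesh_index k)). set (yk := Y (S k) w).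
  assert (Hs : 0 <= s) by (unfold s; assert (0 <= INR k) by apply pos_INR; nra).
  assert (Hp' := mesh_pos). assert (0 <= INR n) by apply pos_INR.
  destruct (mesh_index_time k ltac:(fold s; lra)) as [Htau Htau']. fold s in Htau, Htau'.
  assert (HXk : cube n (r + 1) (X k)) by (apply (cube_near n r _ (Xc s)); [apply HXc; lra|auto]).
  assert (Hcp : cube n (r + 1) cp) by (apply ode_solution_in_cube; lra).
  assert (Hmesh : dist1 (Xc s) cp <= INR n * B / INR p).
  { eapply Rle_trans; [apply (ode_solution_lipschitz n fbar Xc Hode M (r + 1) B ode_solution_in_cube
      Hfbar_bound); lra|].
    unfold Rdiv. apply Rmult_le_compat_l; [nra|lra]. }
  assert (H1 : norm1 n (fun c => eps * (vget (f (X k) yk) c - vget (f cp yk) c))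
      <= eps * L * (dist1 (X k) (Xc s) + INR n * B / INR p)).
  { rewrite norm1_scal, Rabs_right, Rmult_assoc by lra. apply Rmult_le_compat_l; [lra|].
    eapply Rle_trans; [apply Hf_lip; auto; apply HYS|]. apply Rmult_le_compat_l; auto.
    eapply Rle_trans; [apply (dist1_triangle _ (Xc s))|lra]. }
  assert (H2 : norm1 n (fun c => eps * (vget (fbar cp) c - vget (fbar (Xc s)) c))
      <= eps * L * (INR n * B / INR p)).
  { rewrite norm1_scal, Rabs_right, Rmult_assoc by lra. apply Rmult_le_compat_l; [lra|].
    eapply Rle_trans; [apply Hfbar_lip; auto; apply ode_solution_in_cube; lra|].
    rewrite dist1_sym. apply Rmult_le_compat_l; auto. }
  assert (H3 := ode_solution_taylor n fbar Xc Hode M (r + 1) B L ode_solution_in_cube Hfbar_bound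
    Hfbar_lip HL s eps Hs ltac:(lra) ltac:(lra)).
  assert (H4 := dist1_euler_residual k ltac:(fold s; lra)). fold s in H4.
  eapply Rle_trans; [apply norm1_sub|].
  eapply Rle_trans; [apply Rplus_le_compat_r; eapply Rle_trans; [apply norm1_add|];
    apply Rplus_le_compat_r, norm1_add|].
  assert (eps * L * dist1 (X k) (Xc s) <= eps * L * (norm1 n (euler_residual k) + phi))
    by (apply Rmult_le_compat_l; nra).
  unfold gam. replace (2 * L * (INR n * B) / INR p) with (2 * (L * (INR n * B / INR p))) by (field; lra).
  nra.
Qed.

Lemma euler_bound_unfold : euler_bound n L B M p eps kappa = M * gam * exp (L * M) + phi.
Proof. reflexivity. Qed.

Lemma gronwall_factor_le k : INR k * eps <= M ->
  INR k * (eps * gam) * (1 + eps * L) ^ k <= M * gam * exp (L * M).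
Proof.
  intros Hk. assert (Hg := consistency_error_nonneg). assert (0 <= INR k) by apply pos_INR.
  assert (Hpow : (1 + eps * L) ^ k <= exp (L * M)).
  { eapply Rle_trans; [apply pow_le_exp; nra|]. apply exp_le.
    replace (eps * L * INR k) with (L * (INR k * eps)) by ring. apply Rmult_le_compat_l; lra. }
  assert (0 <= (1 + eps * L) ^ k) by (apply pow_le; nra).
  replace (INR k * (eps * gam)) with (INR k * eps * gam) by ring.
  apply Rmult_le_compat; [repeat apply Rmult_le_pos; lra|auto|apply Rmult_le_compat_r; lra|auto].
Qed.

Lemma euler_residual_bound k : INR k * eps <= M ->
  norm1 n (euler_residual k) <= INR k * (eps * gam) * (1 + eps * L) ^ k.
Proof.
  assert (Hg := consistency_error_nonneg).
  induction k; intros Hk.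
  - rewrite (norm1_ext n _ (fun _ => 0)), norm1_zero; [simpl; lra|].
    intros c _. unfold euler_residual, frozen_drift, X. simpl. rewrite Rmult_0_l, Hx. ring.
  - assert (Hk' : INR k * eps <= M) by (rewrite S_INR in Hk; lra).
    specialize (IHk Hk').
    assert (Hnear : dist1 (X k) (Xc (INR k * eps)) <= 1).
    { eapply Rle_trans; [apply dist1_euler_residual; auto|].
      assert (H := gronwall_factor_le k Hk'). rewrite euler_bound_unfold in Hsmall. lra. }
    apply (gronwall_step (norm1 n (euler_residual k))); [nra|nra| |auto].
    apply euler_residual_step; auto.
Qed.

Lemma euler_grid_error k : INR k * eps <= M -> dist1 (X k) (Xc (INR k * eps)) <= euler_bound n L B M p eps kappa.
Proof.
  intros Hk. rewrite euler_bound_unfold. eapply Rle_trans; [apply dist1_euler_residual; auto|].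
  assert (H1 := euler_residual_bound k Hk). assert (H2 := gronwall_factor_le k Hk). lra.
Qed.

Lemma euler_deviation t : 0 <= t <= M ->
  vnorm (vsub (Xcont f Y eps x w t) (Xc t)) <= euler_bound n L B M p eps kappa + INR n * B * eps.
Proof.
  intros Ht. set (k := nat_floor (t / eps)).
  assert (Hk : INR k <= t / eps < INR k + 1) by (apply nat_floor_spec, Rdiv_le_0_compat; lra).
  assert (Hks : INR k * eps <= t < INR k * eps + eps).
  { destruct Hk as [H1 H2]. apply (Rmult_le_compat_r eps) in H1; [|lra].
    apply (Rmult_lt_compat_r eps) in H2; [|lra].
    replace (t / eps * eps) with t in * by (field; lra). lra. }
  assert (0 <= INR k * eps) by (assert (0 <= INR k) by apply pos_INR; nra).
  change (Xcont f Y eps x w t) with (X k).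
  eapply Rle_trans; [apply vnorm_le_dist1|].
  eapply Rle_trans; [apply (dist1_triangle _ (Xc (INR k * eps)))|].
  assert (H1 := euler_grid_error k ltac:(lra)).
  assert (H2 : dist1 (Xc (INR k * eps)) (Xc t) <= INR n * B * eps).
  { rewrite dist1_sym.
    eapply Rle_trans; [apply (ode_solution_lipschitz n fbar Xc Hode M (r + 1) B ode_solution_in_cube
      Hfbar_bound); lra|].
    apply Rmult_le_compat_l; [assert (0 <= INR n) by apply pos_INR; nra|lra]. }
  lra.
Qed.

End EulerScheme.

Lemma small_multiple (A r : R) : 0 <= A -> 0 < r -> exists e, 0 < e /\ forall y, 0 <= y <= e -> A * y <= r.
Proof.
  intros HA Hr. exists (r / (A + 1)). split; [apply Rdiv_lt_0_compat; lra|].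
  intros y Hy. apply Rle_trans with (A * (r / (A + 1))); [apply Rmult_le_compat_l; lra|].
  apply (Rmult_le_reg_r (A + 1)); [lra|].
  replace (A * (r / (A + 1)) * (A + 1)) with (A * r) by (field; lra). nra.
Qed.

Lemma large_nat_div (A r : R) : 0 <= A -> 0 < r -> exists p, (0 < p)%nat /\ A / INR p <= r.
Proof.
  intros HA Hr. destruct (archimed_cor1 (r / (A + 1))) as [p [Hp Hp0]]; [apply Rdiv_lt_0_compat; lra|].
  exists p. split; auto. assert (0 < INR p) by (apply lt_0_INR; auto).
  apply (Rmult_lt_compat_r (A + 1)) in Hp; [|lra].
  replace (r / (A + 1) * (A + 1)) with r in Hp by (field; lra).
  unfold Rdiv. apply Rle_trans with (/ INR p * (A + 1)); [|lra].
  rewrite Rmult_comm. apply Rmult_le_compat_l; [left; apply Rinv_0_lt_compat|]; lra.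
Qed.

(** Each of the four terms of the error bound is made at most a quarter of the target:
    first the mesh [1/p], then the tolerance [eta] on the drift sums, then [eps]. *)
Lemma euler_parameters n (L B M delta : R) : 0 <= L -> 0 <= B -> 0 <= M -> 0 < delta ->
  exists p, (0 < p)%nat /\ exists eta, 0 < eta /\ forall C, 0 <= C -> exists e1, 0 < e1 /\
    forall eps, 0 < eps < e1 -> euler_bound n L B M p eps (eps * C + eta * M) + INR n * B * eps <= Rmin delta 1.
Proof.
  intros HL HB HM Hd. set (rho := Rmin delta 1). assert (Hrho : 0 < rho) by (apply Rmin_pos; lra).
  set (E := exp (L * M)). assert (HE : 0 < E) by apply exp_pos.
  assert (Hn : 0 <= INR n) by apply pos_INR.
  assert (HK : 0 <= 1 + L * M * E) by (assert (0 <= L * M * E) by (repeat apply Rmult_le_pos; lra); lra).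
  destruct (large_nat_div (2 * L * (INR n * B) * M * E) (rho / 4)) as [p [Hp Hpb]];
    [repeat apply Rmult_le_pos; lra|lra|].
  assert (HpR : 0 < INR p) by (apply lt_0_INR; auto).
  set (Kp := 2 * M * INR p + 1). assert (HKp : 0 <= Kp) by (unfold Kp; nra).
  destruct (small_multiple (Kp * (1 + L * M * E) * M) (rho / 4)) as [eta [Heta Hetab]];
    [repeat apply Rmult_le_pos; lra|lra|].
  exists p. split; auto. exists eta. split; auto. intros C HC.
  destruct (small_multiple (Kp * (1 + L * M * E) * C) (rho / 4)) as [e2 [He2 He2b]];
    [repeat apply Rmult_le_pos; lra|lra|].
  destruct (small_multiple (INR n * L * (INR n * B) * M * E + INR n * B) (rho / 4)) as [e3 [He3 He3b]];
    [assert (0 <= INR n * L * (INR n * B) * M * E) by (repeat apply Rmult_le_pos; lra);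
     assert (0 <= INR n * B) by nra; lra|lra|].
  exists (Rmin e2 e3). split; [apply Rmin_pos; auto|]. intros eps [Heps He].
  assert (H1 := Hetab eta ltac:(lra)).
  assert (H2 := He2b eps ltac:(split; [lra|assert (H := Rmin_l e2 e3); lra])).
  assert (H3 := He3b eps ltac:(split; [lra|assert (H := Rmin_r e2 e3); lra])).
  replace (euler_bound n L B M p eps (eps * C + eta * M) + INR n * B * eps) with
    (Kp * (1 + L * M * E) * C * eps + Kp * (1 + L * M * E) * M * eta +
     2 * L * (INR n * B) * M * E / INR p + (INR n * L * (INR n * B) * M * E + INR n * B) * eps)
    by (unfold euler_bound, Kp, E; field; lra).
  lra.
Qed.

(** * A diagonal horizon *)

Fixpoint diag_threshold (e : nat -> R) (k : nat) : R :=
  match k with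
  | O => Rmin (e O) 1
  | S k' => Rmin (diag_threshold e k') (Rmin (e (S k')) (/ INR (S (S k'))))
  end.

(** The largest [k <= K] with [eps < thr k], or [0] if there is none. *)
Fixpoint last_index_below (thr : nat -> R) (eps : R) (K : nat) : nat :=
  match K with
  | O => O
  | S K' => if Rlt_dec eps (thr (S K')) then S K' else last_index_below thr eps K'
  end.

Lemma diag_threshold_pos e : (forall k, 0 < e k) -> forall k, 0 < diag_threshold e k.
Proof.
  intros He k. induction k; cbn [diag_threshold]; repeat apply Rmin_pos; auto; try lra.
  apply Rinv_0_lt_compat, lt_0_INR; lia.
Qed.

Lemma diag_threshold_le e k : diag_threshold e k <= e k.
Proof. destruct k; cbn [diag_threshold]; [apply Rmin_l|eapply Rle_trans; [apply Rmin_r|apply Rmin_l]]. Qed.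

Lemma diag_threshold_le_inv e k : diag_threshold e k <= / INR (S k).
Proof.
  destruct k; cbn [diag_threshold].
  - replace (/ INR 1) with 1 by (simpl; field). apply Rmin_r.
  - eapply Rle_trans; [apply Rmin_r|apply Rmin_r].
Qed.

Lemma diag_threshold_antitone e k k' : (k <= k')%nat -> diag_threshold e k' <= diag_threshold e k.
Proof. intros H. induction H; [lra|]. cbn [diag_threshold]. eapply Rle_trans; [apply Rmin_l|auto]. Qed.

Lemma last_index_below_spec thr eps K :
  last_index_below thr eps K = O \/ eps < thr (last_index_below thr eps K).
Proof. induction K; simpl; auto. destruct (Rlt_dec eps (thr (S K))); auto. Qed.

Lemma le_last_index_below thr eps : (forall k k', (k <= k')%nat -> thr k' <= thr k) ->
  forall K N, (0 < N)%nat -> (N <= K)%nat -> eps < thr N -> (N <= last_index_below thr eps K)%nat.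
Proof.
  intros Hm K. induction K; intros N HN HNK Heps; [lia|]. simpl.
  destruct (Rlt_dec eps (thr (S K))); auto.
  apply IHK; auto. destruct (Nat.eq_dec N (S K)); [subst; contradiction|lia].
Qed.

Lemma diagonal_horizon (q : R -> nat -> R) :
  (forall k, exists e, 0 < e /\ forall eps, 0 < eps < e -> q eps k < / INR (S k)) ->
  exists T : R -> nat, forall N, exists e1, 0 < e1 /\ forall eps, 0 < eps < e1 ->
    (N <= T eps)%nat /\ q eps (T eps) < / INR (S (T eps)).
Proof.
  intros Hq. destruct (choice _ Hq) as [e He].
  assert (Hepos : forall k, 0 < e k) by (intros k; apply He).
  set (thr := diag_threshold e).
  exists (fun eps => last_index_below thr eps (nat_floor (/ eps))). intros N.
  exists (thr (S N)). split; [apply diag_threshold_pos; auto|]. intros eps Heps.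
  assert (HN : (S N <= last_index_below thr eps (nat_floor (/ eps)))%nat).
  { apply le_last_index_below; [intros; apply diag_threshold_antitone; auto|lia| |lra].
    apply le_nat_floor; [left; apply Rinv_0_lt_compat; lra|].
    assert (H1 := diag_threshold_le_inv e (S N)). fold thr in H1.
    assert (H3 : 0 < INR (S (S N))) by (apply lt_0_INR; lia).
    assert (H4 : eps < / INR (S (S N))) by lra.
    apply Rinv_lt_contravar in H4; [|apply Rmult_lt_0_compat; [lra|apply Rinv_0_lt_compat; lra]].
    rewrite Rinv_inv in H4.
    rewrite S_INR in H4. lra. }
  split; [lia|]. apply He. split; [lra|].
  destruct (last_index_below_spec thr eps (nat_floor (/ eps))) as [H0|H0]; [lia|].
  eapply Rlt_le_trans; [apply H0|apply diag_threshold_le].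
Qed.

(** * Averaging for the stochastic recursion *)

Lemma finite_uniform_bound (Q : nat -> R -> Prop) :
  (forall i C C', C <= C' -> Q i C -> Q i C') ->
  forall K, (forall i, (i <= K)%nat -> exists C, 0 <= C /\ Q i C) ->
  exists C, 0 <= C /\ forall i, (i <= K)%nat -> Q i C.
Proof.
  intros Hmon K. induction K; intros H.
  - destruct (H 0%nat (le_n _)) as [C [HC HQ]]. exists C. split; auto.
    intros i Hi. replace i with 0%nat by lia. auto.
  - destruct IHK as [C1 [HC1 HQ1]]; [intros; apply H; lia|].
    destruct (H (S K) (le_n _)) as [C2 [HC2 HQ2]]. exists (Rmax C1 C2).
    split; [eapply Rle_trans; [apply HC1|apply Rmax_l]|].
    intros i Hi. destruct (Nat.eq_dec i (S K)) as [->|Hne].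
    + eapply Hmon; [apply Rmax_r|auto].
    + eapply Hmon; [apply Rmax_l|apply HQ1; lia].
Qed.

Section StochasticApproximation.

Variables (n m : nat) (Omega : Type) (F : (Omega -> Prop) -> Prop) (P : (Omega -> Prop) -> R).
Hypothesis HP : is_probability F P.
Variables (SY : vec m -> Prop) (Y : nat -> Omega -> vec m).
Hypothesis HYrv : forall k, random_vec F (Y k).
Hypothesis HYS : forall k w, SY (Y k w).
Variables (f : vec n -> vec m -> vec n) (x : vec n) (fbar : vec n -> vec n) (Xc : R -> vec n).
Hypothesis A1_cont : jointly_continuous f.
Hypothesis A1_bdd : forall z, exists B, forall y, SY y -> vnorm (f z y) <= B.
Hypothesis A1_lip : forall D : vec n -> Prop, is_compact D ->
  exists kD, forall x1 x2 y, D x1 -> D x2 -> SY y -> vnorm (vsub (f x1 y) (f x2 y)) <= kD * vnorm (vsub x1 x2).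
Hypothesis A2 : forall z, almost_surely F P (fun w => vec_cv (ergodic_avg f Y w z) (fbar z)).
Hypothesis A3_init : Xc 0 = x.
Hypothesis A3_ode : ode_solution_nonneg fbar Xc.

Let HF : is_sigma_algebra F := proj1 HP.

Lemma f_norm1_bounded z : exists B, 0 <= B /\ forall y, SY y -> norm1 n (vget (f z y)) <= B.
Proof.
  destruct (A1_bdd z) as [B0 HB0]. assert (0 <= INR n) by apply pos_INR.
  exists (INR n * Rmax B0 0). split; [apply Rmult_le_pos; [lra|apply Rmax_r]|].
  intros y Hy. eapply Rle_trans; [apply norm1_le_norm2|]. apply Rmult_le_compat_l; auto.
  rewrite <- vnorm_norm2. eapply Rle_trans; [apply HB0; auto|apply Rmax_l].
Qed.

Lemma f_local_bounds R0 : 0 <= R0 -> exists L B, 0 <= L /\ 0 <= B /\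
  (forall z1 z2 y, cube n R0 z1 -> cube n R0 z2 -> SY y -> dist1 (f z1 y) (f z2 y) <= L * dist1 z1 z2) /\
  (forall z y, cube n R0 z -> SY y -> norm1 n (vget (f z y)) <= B).
Proof.
  intros HR0. destruct (A1_lip (cube n R0)) as [kD HkD]; [apply cube_compact; auto|].
  assert (Hn : 0 <= INR n) by apply pos_INR.
  set (L := INR n * Rmax kD 0).
  assert (HL : 0 <= L) by (apply Rmult_le_pos; [lra|apply Rmax_r]).
  assert (Hf_lip : forall z1 z2 y, cube n R0 z1 -> cube n R0 z2 -> SY y ->
      dist1 (f z1 y) (f z2 y) <= L * dist1 z1 z2).
  { intros z1 z2 y H1 H2 Hy. eapply Rle_trans; [apply dist1_le_vnorm|].
    unfold L. rewrite Rmult_assoc. apply Rmult_le_compat_l; auto.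
    eapply Rle_trans; [apply HkD; auto|].
    assert (Hv := vnorm_le_dist1 z1 z2). assert (0 <= vnorm (vsub z1 z2)) by apply vnorm_nonneg.
    assert (kD <= Rmax kD 0) by apply Rmax_l. assert (0 <= Rmax kD 0) by apply Rmax_r.
    apply Rle_trans with (Rmax kD 0 * vnorm (vsub z1 z2));
      [apply Rmult_le_compat_r|apply Rmult_le_compat_l]; auto. }
  set (z0 := mkvec n (fun _ => 0)).
  assert (Hz0 : cube n R0 z0) by (intros i Hi; unfold z0; rewrite vget_mkvec, Rabs_R0 by auto; lra).
  destruct (f_norm1_bounded z0) as [B0 [HB0 HB0']].
  exists L, (B0 + L * (INR n * R0)). repeat split; auto.
  - assert (0 <= L * (INR n * R0)) by (apply Rmult_le_pos; nra). lra.
  - intros z y Hz Hy.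
    assert (H1 : norm1 n (vget (f z y)) <= dist1 (f z y) (f z0 y) + norm1 n (vget (f z0 y))).
    { unfold dist1. eapply Rle_trans; [|apply norm1_add]. right. apply norm1_ext. intros; ring. }
    assert (H2 := Hf_lip z z0 y Hz Hz0 Hy). assert (H3 := HB0' y Hy).
    assert (H4 : dist1 z z0 <= INR n * R0).
    { unfold dist1, norm1. rewrite <- rsum_const. apply rsum_le. intros i Hi.
      unfold z0. rewrite vget_mkvec, Rminus_0_r by auto. apply Hz; auto. }
    assert (L * dist1 z z0 <= L * (INR n * R0)) by (apply Rmult_le_compat_l; auto).
    lra.
Qed.

(** The constants of [fbar] are inherited from those of [f] through the averages, at any
    sample point where these converge. *)
Lemma local_bounds_exist M : 0 <= M -> exists r L B, 0 <= L /\ 0 <= B /\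
  (forall t, 0 <= t <= M -> cube n r (Xc t)) /\
  (forall z1 z2 y, cube n (r + 1) z1 -> cube n (r + 1) z2 -> SY y -> dist1 (f z1 y) (f z2 y) <= L * dist1 z1 z2) /\
  (forall z1 z2, cube n (r + 1) z1 -> cube n (r + 1) z2 -> dist1 (fbar z1) (fbar z2) <= L * dist1 z1 z2) /\
  (forall z y, cube n (r + 1) z -> SY y -> norm1 n (vget (f z y)) <= B) /\
  (forall z, cube n (r + 1) z -> norm1 n (vget (fbar z)) <= B).
Proof.
  intros HM. destruct (ode_solution_bounded n fbar Xc A3_ode M HM) as [r [Hr HXc]].
  destruct (f_local_bounds (r + 1)) as [L [B [HL [HB [Hf_lip Hf_bound]]]]]; [lra|].
  exists r, L, B. repeat split; auto.
  - intros z1 z2 H1 H2.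
    destruct (almost_surely_inhabited HF HP _ (almost_surely_forall_nat HF HP
      (fun k w => vec_cv (ergodic_avg f Y w (match k with O => z1 | _ => z2 end))
                         (fbar (match k with O => z1 | _ => z2 end))) (fun k => A2 _))) as [w Hw].
    apply (limit_of_avg_lipschitz f Y w SY (fun k => HYS k w) fbar L z1 z2 (Hw 0%nat) (Hw 1%nat)).
    intros; apply Hf_lip; auto.
  - intros z Hz. destruct (almost_surely_inhabited HF HP _ (A2 z)) as [w Hw].
    apply (limit_of_avg_bound f Y w SY (fun k => HYS k w) fbar B z Hw). intros; apply Hf_bound; auto.
Qed.

Lemma uniform_deviation_bound M : 0 <= M -> forall delta, 0 < delta ->
  exists p, (0 < p)%nat /\ exists eta, 0 < eta /\ forall C, 0 <= C -> exists e1, 0 < e1 /\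
  forall w, (forall i N, INR i <= M * INR p ->
                norm1 n (drift_sum f Y w fbar (mesh_point Xc p i) N) <= C + eta * INR N) ->
  forall eps, 0 < eps < e1 -> forall t, 0 <= t <= M -> vnorm (vsub (Xcont f Y eps x w t) (Xc t)) <= delta.
Proof.
  intros HM delta Hdelta.
  destruct (local_bounds_exist M HM) as [r [L [B [HL [HB [HXc [Hf_lip [Hfbar_lip [_ Hfbar_bound]]]]]]]]].
  destruct (euler_parameters n L B M delta HL HB HM Hdelta) as [p [Hp [eta [Heta Hpar]]]].
  exists p. split; auto. exists eta. split; auto. intros C HC.
  destruct (Hpar C HC) as [e1 [He1 He1']]. exists e1. split; auto.
  intros w Hw eps Heps t Ht. specialize (He1' eps Heps).
  assert (Hmin := Rmin_l delta 1). assert (Hmin1 := Rmin_r delta 1).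
  assert (0 <= INR n * B * eps) by (apply Rmult_le_pos; [apply Rmult_le_pos; [apply pos_INR|]|]; lra).
  assert (Hdrift : forall i N, INR i <= M * INR p -> INR N * eps <= M ->
      eps * norm1 n (drift_sum f Y w fbar (mesh_point Xc p i) N) <= eps * C + eta * M).
  { intros i N Hi HN. specialize (Hw i N Hi).
    apply Rle_trans with (eps * (C + eta * INR N)); [apply Rmult_le_compat_l; lra|].
    assert (eta * (INR N * eps) <= eta * M) by (apply Rmult_le_compat_l; lra). lra. }
  assert (Hdev := euler_deviation SY Y f fbar Xc x w (fun k => HYS k w) A3_ode A3_init M r L B
    HM HL HB HXc Hf_lip Hfbar_lip Hfbar_bound p eps (eps * C + eta * M) Hp ltac:(lra) Hdrift
    ltac:(lra) t Ht).
  lra.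
Qed.

Definition good_event (w : Omega) : Prop :=
  forall p i, vec_cv (ergodic_avg f Y w (mesh_point Xc p i)) (fbar (mesh_point Xc p i)).

Lemma good_event_as : almost_surely F P good_event.
Proof.
  apply (almost_surely_forall_nat HF HP (fun p w => forall i, vec_cv (ergodic_avg f Y w (mesh_point Xc p i))
    (fbar (mesh_point Xc p i)))). intros p.
  apply (almost_surely_forall_nat HF HP (fun i w => vec_cv (ergodic_avg f Y w (mesh_point Xc p i))
    (fbar (mesh_point Xc p i)))). intros i. apply A2.
Qed.

Lemma drift_sums_controlled w : good_event w -> forall p M eta, 0 < eta ->
  exists C, 0 <= C /\ forall i N, INR i <= M * INR p ->
    norm1 n (drift_sum f Y w fbar (mesh_point Xc p i) N) <= C + eta * INR N.
Proof.
  intros Hw p M eta Heta.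
  set (Q := fun i C => forall N, norm1 n (drift_sum f Y w fbar (mesh_point Xc p i) N) <= C + eta * INR N).
  assert (Hmon : forall i C C', C <= C' -> Q i C -> Q i C')
    by (intros i C C' HCC' H N; specialize (H N); lra).
  assert (Hex : forall i, exists C, 0 <= C /\ Q i C).
  { intros i. set (z := mesh_point Xc p i).
    destruct (f_norm1_bounded z) as [B [HB HfB]]. assert (Hcv : vec_cv (ergodic_avg f Y w z) (fbar z)) by apply Hw.
    apply (drift_sum_sublinear f Y w SY (fun k => HYS k w) fbar z B HfB); auto.
    apply (limit_of_avg_bound f Y w SY (fun k => HYS k w) fbar B z); auto. }
  destruct (finite_uniform_bound Q Hmon (nat_floor (Rmax (M * INR p) 0)) (fun i _ => Hex i))
    as [C [HC HCi]].
  exists C. split; auto. intros i N Hi. apply HCi.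
  apply le_nat_floor; [apply Rmax_r|]. eapply Rle_trans; [apply Hi|apply Rmax_l].
Qed.

Lemma deviation_exit_time_as delta : 0 < delta ->
  almost_surely F P (fun w => forall M, exists e1, 0 < e1 /\ forall eps, 0 < eps < e1 ->
    exit_time_ge (fun t => vnorm (vsub (Xcont f Y eps x w t) (Xc t))) delta M).
Proof.
  intros Hdelta. apply (almost_surely_impl _ _ good_event_as). intros w Hw M.
  set (M' := Rmax M 0). assert (HM' : 0 <= M') by apply Rmax_r.
  destruct (uniform_deviation_bound M' HM' delta Hdelta) as [p [Hp [eta [Heta Hdev]]]].
  destruct (drift_sums_controlled w Hw p M' eta Heta) as [C [HC HC']].
  destruct (Hdev C HC) as [e1 [He1 He1']]. exists e1. split; auto.
  intros eps Heps t Ht Hgt. destruct (Rle_dec M t) as [|Hlt]; auto. exfalso.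
  assert (H := He1' w HC' eps Heps t ltac:(split; [lra|unfold M'; eapply Rle_trans; [|apply Rmax_l]; lra])).
  lra.
Qed.

Lemma deviation_prob_small (Mn : nat) delta eta : 0 < delta -> 0 < eta ->
  exists e, 0 < e /\ forall eps, 0 < eps < e ->
    P (fun w => exists t, 0 <= t <= INR Mn /\ vnorm (vsub (Xcont f Y eps x w t) (Xc t)) > delta) < eta.
Proof.
  intros Hdelta Heta. set (M := INR Mn). assert (HM : 0 <= M) by apply pos_INR.
  destruct (uniform_deviation_bound M HM (delta / 2) ltac:(lra)) as [p [Hp [eta' [Heta' Hdev]]]].
  set (W := fun (j : nat) w => forall i N, INR i <= M * INR p ->
    norm1 n (drift_sum f Y w fbar (mesh_point Xc p i) N) <= INR j + eta' * INR N).
  assert (HW : forall j, F (W j)).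
  { intros j. apply (sigma_inter HF). intros i. apply (sigma_inter HF). intros N.
    apply (sigma_const_imp HF). intros _. apply (event_drift_sum_le HF); auto. }
  assert (Hinc : forall j w, W j w -> W (S j) w)
    by (intros j w H i N Hi; specialize (H i N Hi); rewrite S_INR; lra).
  assert (Has : almost_surely F P (fun w => exists j, W j w)).
  { apply (almost_surely_impl _ _ good_event_as). intros w Hw.
    destruct (drift_sums_controlled w Hw p M eta' Heta') as [C [HC HC']].
    exists (S (nat_floor C)). intros i N Hi. eapply Rle_trans; [apply HC'; auto|].
    destruct (nat_floor_spec C HC). rewrite S_INR. lra. }
  destruct (prob_increasing_union HF HP W HW Hinc Has eta Heta) as [j Hj].
  destruct (Hdev (INR j) (pos_INR j)) as [e1 [He1 He1']].
  exists e1. split; auto. intros eps Heps.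
  eapply Rle_lt_trans; [|apply Hj].
  apply (prob_mono HF HP); [apply (event_deviation HF); auto|apply (sigma_compl HF); auto|].
  intros w [t [Ht Hd]] HWw. assert (H := He1' w HWw eps Heps t Ht). lra.
Qed.

Lemma deviation_horizon : exists T : R -> nat,
  (forall N : nat, exists e1, 0 < e1 /\ forall eps, 0 < eps < e1 -> (N <= T eps)%nat) /\
  (forall delta, 0 < delta -> forall eta, 0 < eta -> exists e1, 0 < e1 /\ forall eps, 0 < eps < e1 ->
     P (fun w => exists t, 0 <= t <= INR (T eps) /\ vnorm (vsub (Xcont f Y eps x w t) (Xc t)) > delta) < eta).
Proof.
  set (q := fun eps k => P (fun w => exists t, 0 <= t <= INR k /\
    vnorm (vsub (Xcont f Y eps x w t) (Xc t)) > / INR (S k))).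
  assert (Hinv : forall k, 0 < / INR (S k)) by (intros; apply Rinv_0_lt_compat, lt_0_INR; lia).
  destruct (diagonal_horizon q) as [T HT].
  { intros k. apply deviation_prob_small; auto. }
  exists T. split.
  - intros N. destruct (HT N) as [e1 [He1 H]]. exists e1. split; auto. apply H.
  - intros delta Hdelta eta Heta.
    destruct (archimed_cor1 (Rmin delta eta)) as [N [HN HN0]]; [apply Rmin_pos; auto|].
    destruct (HT N) as [e1 [He1 H]]. exists e1. split; auto. intros eps Heps.
    destruct (H eps Heps) as [HNT Hq].
    assert (Hle : / INR (S (T eps)) <= / INR N)
      by (apply Rinv_le_contravar; [apply lt_0_INR; auto|apply le_INR; lia]).
    assert (Hmin := Rmin_l delta eta). assert (Hmin' := Rmin_r delta eta).
    eapply Rle_lt_trans; [|apply Rlt_le_trans with (/ INR (S (T eps))); [apply Hq|lra]].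
    apply (prob_mono HF HP); try apply (event_deviation HF); auto.
    intros w [t [Ht Hd]]. exists t. split; auto. lra.
Qed.

End StochasticApproximation.

Theorem theorem3
  (n m : nat) (Omega : Type)
  (F : (Omega -> Prop) -> Prop) (P : (Omega -> Prop) -> R)
  (HP : is_probability F P) (HPc : is_complete F P)
  (eps0 : R) (Heps0 : 0 < eps0)
  (SY : vec m -> Prop) (Y : nat -> Omega -> vec m)
  (HYrv : forall k, random_vec F (Y k))
  (HYS : forall k w, SY (Y k w))
  (f : vec n -> vec m -> vec n) (x : vec n)
  (fbar : vec n -> vec n) (Xc : R -> vec n)
  (* (A1) *)
  (A1_cont : jointly_continuous f)
  (A1_bdd : forall z, exists B, forall y, SY y -> vnorm (f z y) <= B)
  (A1_lip : forall D : vec n -> Prop, is_compact D ->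
     exists kD, forall x1 x2 y, D x1 -> D x2 -> SY y ->
       vnorm (vsub (f x1 y) (f x2 y)) <= kD * vnorm (vsub x1 x2))
  (* (A2) *)
  (A2 : forall z, almost_surely F P (fun w =>
     vec_cv (fun N => vscal (/ INR (N + 1)) (vsum (fun k => f z (Y (S k) w)) N))
            (fbar z)))
  (* (A3) *)
  (A3_init : Xc 0 = x)
  (A3_ode : ode_solution_nonneg fbar Xc) :
  (* (i) *)
  (forall delta, 0 < delta ->
     almost_surely F P (fun w =>
       forall M, exists e1, 0 < e1 /\ forall eps, 0 < eps < e1 -> eps < eps0 ->
         exit_time_ge (fun t => vnorm (vsub (Xcont f Y eps x w t) (Xc t))) delta M))
  /\
  (* (ii) *)
  (exists T : R -> nat,
     (forall N : nat, exists e1, 0 < e1 /\ forall eps, 0 < eps < e1 -> eps < eps0 ->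
        (N <= T eps)%nat) /\
     (forall delta, 0 < delta -> forall eta, 0 < eta ->
        exists e1, 0 < e1 /\ forall eps, 0 < eps < e1 -> eps < eps0 ->
          Rabs (P (fun w => exists t, 0 <= t <= INR (T eps) /\
                  vnorm (vsub (Xcont f Y eps x w t) (Xc t)) > delta)) < eta)).
Proof.
  split.
  - intros delta Hdelta.
    apply (almost_surely_impl _ _ (deviation_exit_time_as n m Omega F P HP SY Y HYS f x fbar Xc
      A1_bdd A1_lip A2 A3_init A3_ode delta Hdelta)).
    intros w Hw M. destruct (Hw M) as [e1 [He1 H]].
    exists e1. split; [auto|intros eps Heps _; apply H; auto].
  - destruct (deviation_horizon n m Omega F P HP SY Y HYrv HYS f x fbar Xc
      A1_cont A1_bdd A1_lip A2 A3_init A3_ode) as [T [HT HTP]].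
    exists T. split.
    + intros N. destruct (HT N) as [e1 [He1 H]].
      exists e1. split; [auto|intros eps Heps _; apply H; auto].
    + intros delta Hdelta eta Heta. destruct (HTP delta Hdelta eta Heta) as [e1 [He1 H]].
      exists e1. split; auto. intros eps Heps _.
      rewrite Rabs_right; [apply H; auto|apply Rle_ge, (prob_nonneg HP), (event_deviation (proj1 HP)); auto].
Qed.
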